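(* There is an absolute constant $C>0$ such that the following holds. Let $0<\delta\le\frac14$, $0<a<\pi$, $\lambda\ge1$, $M\ge1$, $0<\kappa\le1$, and $0\le\mu<1-\delta$. Let $g$ be a continuous function on the closed unit disk, analytic on its interior, satisfying $|g(\delta)|\ge\kappa$ and, for every $0<\gamma\le1-\delta$, $|z|\le1-\gamma\Rightarrow|g(z)|\le\frac{\lambda M}{\gamma}$. Let $\Gamma_\mu$ be the circle with center $\delta$ and radius $1-\delta-\mu$, and let $P$ be the closed arc of $\Gamma_\mu$ that is symmetric with respect to the real axis, has midpoint $1-\mu$, and has arc length $a$. Then $$\max_{z\in P}|g(z)|\ge\left(\frac{\delta\kappa}{\lambda M}\right)^{C/a}.$$
   Context: The paper writes the bound as $(\delta\kappa/(\lambda M))^{O(1/a)}$, where $O(\cdot)$ hides an absolute constant. *)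

From Stdlib Require Import Reals.
From Coquelicot Require Export Coquelicot.
Open Scope R_scope.

Definition gamma_radius (delta mu : R) : R := 1 - delta - mu.

(* The closed arc P of Gamma_mu, symmetric w.r.t. the real axis, with
   midpoint 1 - mu (= delta + radius, angle 0) and arc length a:
   the points delta + r e^{i theta} with |theta| <= a / (2 r). *)
Definition arcP (delta mu a : R) (z : C) : Prop :=
  exists theta : R,
    Rabs theta <= a / (2 * gamma_radius delta mu) /\
    z = (delta + gamma_radius delta mu * cos theta,
         gamma_radius delta mu * sin theta).

Definition C_holo_at (g : C -> C) (z : C) : Prop :=
  ex_derive (K := C_AbsRing) (V := C_NormedModule) g z.

Definition cont_on_closed_disk (g : C -> C) : Prop :=
  forall z : C, Cmod z <= 1 ->
    filterlim g (within (fun w : C => Cmod w <= 1) (locally z)) (locally (g z)).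

(* Suppose [|g| < b] on the arc [P]; its angular half-width about [delta] is at
   least [a / 2].  Choose [n = 2^k] with [2 PI / a <= n < 4 PI / a] and let [G] be
   the product of the [n] rotations of [g] about [delta] by the multiples of
   [2 PI / n], so that [|G delta| = |g delta|^n >= kappa^n].  At any point of the
   circle [Gamma_mu] one factor of [G] is a value of [g] on [P], hence below [b],
   while a factor at angle [theta] is at most [8 lambda M / (delta (1 - cos theta))]
   by the growth hypothesis; the product of the [1 - cos] at the nonzero multiples
   of [2 PI / n] is at least [2^(1 - n)] by a doubling identity for products of
   sines.  The maximum modulus principle, obtained from Goursat's lemma on polar
   rectangles and the mean value property, then gives
   [kappa^n <= b (16 lambda M / delta)^(n - 1)], which is false for
   [b = (delta kappa / (lambda M))^(12 PI / a)]. *)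

From Stdlib Require Import Reals Lra Lia Classical FunctionalExtensionality ClassicalEpsilon.
From Coquelicot Require Import Coquelicot.
Open Scope R_scope.

Lemma Rabs_fst_le_Cmod (z : C) : Rabs (fst z) <= Cmod z.
Proof.
  destruct z as [x y]; unfold Cmod; simpl. rewrite <- sqrt_Rsqr_abs.
  apply sqrt_le_1_alt. unfold Rsqr. nra.
Qed.

Lemma Rabs_snd_le_Cmod (z : C) : Rabs (snd z) <= Cmod z.
Proof.
  destruct z as [x y]; unfold Cmod; simpl. rewrite <- sqrt_Rsqr_abs.
  apply sqrt_le_1_alt. unfold Rsqr. nra.
Qed.

Lemma Cmod_le_Rabs_fst_snd (z : C) : Cmod z <= Rabs (fst z) + Rabs (snd z).
Proof.
  destruct z as [x y]; unfold Cmod; cbn [fst snd].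
  pose proof (Rabs_pos x); pose proof (Rabs_pos y).
  rewrite <- (sqrt_Rsqr (Rabs x + Rabs y)) by lra.
  apply sqrt_le_1_alt. unfold Rsqr.
  rewrite <- (pow2_abs x), <- (pow2_abs y). nra.
Qed.

Lemma sin_lipschitz a b : Rabs (sin b - sin a) <= Rabs (b - a).
Proof.
  destruct (MVT_abs sin cos a b) as [c [Hc _]].
  { intros; apply derivable_pt_lim_sin. }
  rewrite Hc. pose proof (COS_bound c).
  assert (Rabs (cos c) <= 1) by (apply Rabs_le; lra).
  pose proof (Rabs_pos (b - a)). nra.
Qed.

Lemma cos_lipschitz a b : Rabs (cos b - cos a) <= Rabs (b - a).
Proof.
  destruct (MVT_abs cos (fun x => - sin x) a b) as [c [Hc _]].
  { intros; apply derivable_pt_lim_cos. }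
  rewrite Hc. pose proof (SIN_bound c).
  assert (Rabs (- sin c) <= 1) by (apply Rabs_le; lra).
  pose proof (Rabs_pos (b - a)). nra.
Qed.

(** * Polar coordinates *)

Definition expi (t : R) : C := (cos t, sin t).

Definition polar (c : C) (r t : R) : C := (c + RtoC r * expi t)%C.

Lemma Cmod_expi t : Cmod (expi t) = 1.
Proof.
  unfold Cmod, expi; cbn [fst snd]. rewrite <- sqrt_1. f_equal.
  pose proof (sin2_cos2 t). unfold Rsqr in H. lra.
Qed.

Lemma expi_lipschitz t v : Cmod (expi t - expi v) <= 2 * Rabs (t - v).
Proof.
  eapply Rle_trans; [apply Cmod_le_Rabs_fst_snd|].
  pose proof (cos_lipschitz v t); pose proof (sin_lipschitz v t).
  unfold expi; simpl. unfold Rminus in *. lra.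
Qed.

Lemma Cmod_polar_sub_center c r t : Cmod (polar c r t - c) = Rabs r.
Proof.
  unfold polar. replace (c + RtoC r * expi t - c)%C with (RtoC r * expi t)%C by ring.
  rewrite Cmod_mult, Cmod_expi, Cmod_R. ring.
Qed.

Lemma polar_lipschitz c r t u v :
  Cmod (polar c r t - polar c u v) <= Rabs (r - u) + 2 * Rabs u * Rabs (t - v).
Proof.
  unfold polar.
  replace (c + RtoC r * expi t - (c + RtoC u * expi v))%C
    with (RtoC (r - u) * expi t + RtoC u * (expi t - expi v))%C
    by (rewrite RtoC_minus; ring).
  eapply Rle_trans; [apply Cmod_triangle|].
  rewrite !Cmod_mult, Cmod_expi, !Cmod_R.
  pose proof (expi_lipschitz t v). pose proof (Rabs_pos u). nra.
Qed.

Lemma polar_add_2PI c r t : polar c r (t + 2 * PI) = polar c r t.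
Proof.
  unfold polar, expi. rewrite cos_plus, sin_plus, cos_2PI, sin_2PI.
  f_equal. f_equal. f_equal; ring.
Qed.

Lemma Cmod_polar_real d r t :
  Cmod (polar (RtoC d) r t) = sqrt ((d + r) ^ 2 - 2 * d * r * (1 - cos t)).
Proof.
  unfold Cmod, polar, expi. f_equal. simpl.
  pose proof (sin2_cos2 t). unfold Rsqr in H. nra.
Qed.

Definition continuous_within_at (D : C -> Prop) (H : C -> C) (z : C) : Prop :=
  forall eps, 0 < eps -> exists d, 0 < d /\
    forall w, D w -> Cmod (w - z) < d -> Cmod (H w - H z) < eps.

Notation Ccontinuous_at := (continuous_within_at (fun _ => True)).

Lemma continuous_within_at_const D (k z : C) : continuous_within_at D (fun _ => k) z.
Proof.
  intros eps Heps. exists 1. split; [lra|]. intros w _ _.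
  unfold Cminus. rewrite Cplus_opp_r, Cmod_0. lra.
Qed.

Lemma continuous_within_at_dominated D F H1 H2 z :
  (forall w, Cmod (F w - F z) <= Cmod (H1 w - H1 z) + Cmod (H2 w - H2 z)) ->
  continuous_within_at D H1 z -> continuous_within_at D H2 z -> continuous_within_at D F z.
Proof.
  intros Hdom C1 C2 eps Heps.
  destruct (C1 (eps / 2)) as [d1 [Hd1 D1]]; [lra|].
  destruct (C2 (eps / 2)) as [d2 [Hd2 D2]]; [lra|].
  exists (Rmin d1 d2). split; [apply Rmin_pos; auto|]. intros w Hw Hwz.
  specialize (D1 w Hw (Rlt_le_trans _ _ _ Hwz (Rmin_l _ _))).
  specialize (D2 w Hw (Rlt_le_trans _ _ _ Hwz (Rmin_r _ _))).
  specialize (Hdom w). lra.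
Qed.

Lemma continuous_within_at_plus D H1 H2 z :
  continuous_within_at D H1 z -> continuous_within_at D H2 z ->
  continuous_within_at D (fun w => H1 w + H2 w)%C z.
Proof.
  apply continuous_within_at_dominated. intros w.
  replace (H1 w + H2 w - (H1 z + H2 z))%C with ((H1 w - H1 z) + (H2 w - H2 z))%C by ring.
  apply Cmod_triangle.
Qed.

Lemma continuous_within_at_minus D H1 H2 z :
  continuous_within_at D H1 z -> continuous_within_at D H2 z ->
  continuous_within_at D (fun w => H1 w - H2 w)%C z.
Proof.
  apply continuous_within_at_dominated. intros w.
  replace (H1 w - H2 w - (H1 z - H2 z))%C with ((H1 w - H1 z) + - (H2 w - H2 z))%C by ring.
  rewrite <- (Cmod_opp (H2 w - H2 z)). apply Cmod_triangle.
Qed.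

Lemma continuous_within_at_mult D H1 H2 z :
  continuous_within_at D H1 z -> continuous_within_at D H2 z ->
  continuous_within_at D (fun w => H1 w * H2 w)%C z.
Proof.
  intros C1 C2 eps Heps.
  set (a := Cmod (H1 z)). set (b := Cmod (H2 z)).
  assert (Ha : 0 <= a) by apply Cmod_ge_0. assert (Hb : 0 <= b) by apply Cmod_ge_0.
  set (e := Rmin 1 (eps / (a + b + 1))).
  assert (He : 0 < e) by (apply Rmin_pos; [lra | apply Rdiv_lt_0_compat; lra]).
  assert (He1 : e <= 1) by apply Rmin_l.
  assert (Heps' : e * (a + b + 1) <= eps).
  { apply (Rmult_le_reg_r (/ (a + b + 1))); [apply Rinv_0_lt_compat; lra|].
    rewrite Rmult_assoc, Rinv_r, Rmult_1_r by lra. apply Rmin_r. }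
  destruct (C1 e He) as [d1 [Hd1 D1]]. destruct (C2 e He) as [d2 [Hd2 D2]].
  exists (Rmin d1 d2). split; [apply Rmin_pos; auto|]. intros w Hw Hwz.
  specialize (D1 w Hw (Rlt_le_trans _ _ _ Hwz (Rmin_l _ _))).
  specialize (D2 w Hw (Rlt_le_trans _ _ _ Hwz (Rmin_r _ _))).
  assert (HH2 : Cmod (H2 w) <= b + 1).
  { replace (H2 w) with ((H2 w - H2 z) + H2 z)%C by ring.
    eapply Rle_trans; [apply Cmod_triangle|]. fold b. lra. }
  replace (H1 w * H2 w - H1 z * H2 z)%C
    with ((H1 w - H1 z) * H2 w + H1 z * (H2 w - H2 z))%C by ring.
  eapply Rle_lt_trans; [apply Cmod_triangle|]. rewrite !Cmod_mult. fold a.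
  pose proof (Cmod_ge_0 (H1 w - H1 z)). pose proof (Cmod_ge_0 (H2 w)).
  pose proof (Cmod_ge_0 (H2 w - H2 z)). nra.
Qed.

Lemma continuous_within_at_linear D (B c z : C) :
  continuous_within_at D (fun w => B * (w - c))%C z.
Proof.
  intros eps Heps. pose proof (Cmod_ge_0 B).
  exists (eps / (Cmod B + 1)). split; [apply Rdiv_lt_0_compat; lra|]. intros w _ Hw.
  replace (B * (w - c) - B * (z - c))%C with (B * (w - z))%C by ring.
  rewrite Cmod_mult. pose proof (Cmod_ge_0 (w - z)).
  apply (Rmult_lt_compat_r (Cmod B + 1)) in Hw; [|lra].
  unfold Rdiv in Hw. rewrite Rmult_assoc, Rinv_l, Rmult_1_r in Hw by lra. nra.
Qed.

Lemma continuous_within_at_affine D (k B c z : C) :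
  continuous_within_at D (fun w => k + B * (w - c))%C z.
Proof.
  apply continuous_within_at_plus;
    [apply continuous_within_at_const | apply continuous_within_at_linear].
Qed.

Lemma ex_derive_linear_approx (H : C -> C) z :
  C_holo_at H z ->
  exists l : C, forall eps, 0 < eps -> exists d, 0 < d /\
    forall w, Cmod (w - z) < d -> Cmod (H w - H z - l * (w - z)) <= eps * Cmod (w - z).
Proof.
  intros [l [_ Hd]]. exists l. intros eps Heps.
  destruct (Hd z (fun P HP => HP) (mkposreal eps Heps)) as [d Hdw].
  exists d. split; [apply cond_pos|]. intros w Hw.
  replace (H w - H z - l * (w - z))%C with (minus (minus (H w) (H z)) (scal (minus w z) l))
    by (unfold minus, plus, opp, scal; simpl; change mult with Cmult; ring).
  exact (Hdw w Hw).
Qed.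

Lemma ex_derive_continuous_at (H : C -> C) z :
  C_holo_at H z -> Ccontinuous_at H z.
Proof.
  intros Hder. destruct (ex_derive_linear_approx H z Hder) as [l Hl].
  destruct (Hl 1 Rlt_0_1) as [d [Hd Happrox]].
  intros eps Heps. pose proof (Cmod_ge_0 l).
  exists (Rmin d (eps / (Cmod l + 2))). split.
  { apply Rmin_pos; auto. apply Rdiv_lt_0_compat; lra. }
  intros w _ Hw.
  assert (Hw1 : Cmod (w - z) < d) by (eapply Rlt_le_trans; [exact Hw | apply Rmin_l]).
  assert (Hw2 : Cmod (w - z) * (Cmod l + 2) < eps).
  { apply (Rmult_lt_compat_r (Cmod l + 2)) in Hw; [|lra].
    eapply Rlt_le_trans; [exact Hw|].
    apply (Rle_trans _ (eps / (Cmod l + 2) * (Cmod l + 2))).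
    - apply Rmult_le_compat_r; [lra | apply Rmin_r].
    - right. field. lra. }
  specialize (Happrox w Hw1).
  replace (H w - H z)%C with ((H w - H z - l * (w - z)) + l * (w - z))%C by ring.
  eapply Rle_lt_trans; [apply Cmod_triangle|]. rewrite Cmod_mult.
  pose proof (Cmod_ge_0 (w - z)). nra.
Qed.

Notation CInt := (@RInt C_R_CompleteNormedModule).
Notation ex_CInt := (@ex_RInt C_R_CompleteNormedModule).
Notation Cscal :=
  (@scal R_Ring (CompleteNormedModule.ModuleSpace R_AbsRing C_R_CompleteNormedModule)).

Lemma Cscal_RtoC (k : R) (x : C) : Cscal k x = (RtoC k * x)%C.
Proof.
  destruct x as [a b]. unfold Cmult, RtoC. cbn. unfold prod_scal. cbn.
  change (@scal R_Ring R_ModuleSpace k a) with (k * a).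
  change (@scal R_Ring R_ModuleSpace k b) with (k * b).
  apply injective_projections; cbn; ring.
Qed.

Lemma continuous_R_C_intro (f : R -> C) x :
  (forall eps, 0 < eps -> exists d, 0 < d /\
     forall y, Rabs (y - x) < d -> Cmod (f y - f x) < eps) ->
  @continuous R_UniformSpace C_R_CompleteNormedModule f x.
Proof.
  intros Hc. apply filterlim_locally. intros eps.
  destruct (Hc eps (cond_pos eps)) as [d [Hd Hf]].
  exists (mkposreal d Hd). intros y Hy. specialize (Hf y Hy).
  split; simpl; unfold ball; simpl; unfold AbsRing_ball, abs, minus, plus, opp; simpl.
  - eapply Rle_lt_trans; [apply (Rabs_fst_le_Cmod (f y - f x)%C) | exact Hf].
  - eapply Rle_lt_trans; [apply (Rabs_snd_le_Cmod (f y - f x)%C) | exact Hf].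
Qed.

Lemma continuous_polar_angle (H : C -> C) c r t0 : Ccontinuous_at H (polar c r t0) ->
  @continuous R_UniformSpace C_R_CompleteNormedModule (fun t => H (polar c r t)) t0.
Proof.
  intros Hc. apply continuous_R_C_intro. intros eps Heps.
  destruct (Hc eps Heps) as [d [Hd Hd']].
  assert (Hr : 0 <= Rabs r) by apply Rabs_pos.
  exists (d / (2 * Rabs r + 1)). split; [apply Rdiv_lt_0_compat; lra|].
  intros y Hy. apply Hd'; [exact I|].
  eapply Rle_lt_trans; [apply polar_lipschitz|].
  rewrite Rminus_diag, Rabs_R0, Rplus_0_l. pose proof (Rabs_pos (y - t0)).
  apply (Rmult_lt_compat_r (2 * Rabs r + 1)) in Hy; [|lra].
  unfold Rdiv in Hy. rewrite Rmult_assoc, Rinv_l, Rmult_1_r in Hy by lra. nra.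
Qed.

Lemma continuous_polar_radius (H : C -> C) c r0 t : Ccontinuous_at H (polar c r0 t) ->
  @continuous R_UniformSpace C_R_CompleteNormedModule (fun r => H (polar c r t)) r0.
Proof.
  intros Hc. apply continuous_R_C_intro. intros eps Heps.
  destruct (Hc eps Heps) as [d [Hd Hd']].
  exists d. split; auto. intros y Hy. apply Hd'; [exact I|].
  eapply Rle_lt_trans; [apply polar_lipschitz|].
  rewrite Rminus_diag, Rabs_R0. lra.
Qed.

Lemma continuous_polar_radius_inv (H : C -> C) c r0 t : 0 < r0 -> Ccontinuous_at H (polar c r0 t) ->
  @continuous R_UniformSpace C_R_CompleteNormedModule (fun r => Cscal (/ r) (H (polar c r t))) r0.
Proof.
  intros Hr Hc.
  apply (@continuous_scal R_UniformSpace R_AbsRing C_R_NormedModule (fun r => / r)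
           (fun r => H (polar c r t))).
  - apply continuous_Rinv_comp; [apply continuous_id | lra].
  - apply continuous_polar_radius, Hc.
Qed.

Lemma ex_CInt_continuous (f : R -> C) a b : a <= b ->
  (forall t, a <= t <= b -> @continuous R_UniformSpace C_R_CompleteNormedModule f t) ->
  ex_CInt f a b.
Proof.
  intros Hab Hc. apply ex_RInt_continuous.
  intros z Hz. rewrite Rmin_left, Rmax_right in Hz by lra. apply Hc, Hz.
Qed.

Lemma Cmod_CInt_le (f : R -> C) a b M : a <= b -> ex_CInt f a b ->
  (forall t, a <= t <= b -> Cmod (f t) <= M) -> Cmod (CInt f a b) <= (b - a) * M.
Proof.
  intros Hab Hf HM. rewrite Cmod_norm.
  apply (norm_RInt_le_const (V := C_R_NormedModule) f); auto.
  - intros t Ht. rewrite <- Cmod_norm. apply HM, Ht.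
  - apply (RInt_correct (V := C_R_CompleteNormedModule)), Hf.
Qed.

Lemma CInt_const (k : C) a b : CInt (fun _ => k) a b = (RtoC (b - a) * k)%C.
Proof. rewrite RInt_const. apply Cscal_RtoC. Qed.

(** * Goursat's lemma for polar rectangles *)

Definition arc_integral (H : C -> C) (c : C) (r t1 t2 : R) : C :=
  CInt (fun t => H (polar c r t)) t1 t2.

Definition ray_integral (H : C -> C) (c : C) (t r1 r2 : R) : C :=
  CInt (fun r => Cscal (/ r) (H (polar c r t))) r1 r2.

(* Since [dz / (z - c)] is [i dt] on arcs and [dr / r] on rays, this is [-i] times
   the integral of [H z / (z - c)] along the positively oriented boundary of
   the polar rectangle [[r1, r2] x [t1, t2]] around [c]. *)
Definition polar_boundary_integral (H : C -> C) (c : C) (r1 r2 t1 t2 : R) : C :=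
  ((arc_integral H c r2 t1 t2 - arc_integral H c r1 t1 t2)
   + Ci * (ray_integral H c t2 r1 r2 - ray_integral H c t1 r1 r2))%C.

Definition continuous_on_polar_rectangle (H : C -> C) (c : C) (r1 r2 t1 t2 : R) : Prop :=
  forall r t, r1 <= r <= r2 -> t1 <= t <= t2 -> Ccontinuous_at H (polar c r t).

Section PolarRectangle.

Variables (H : C -> C) (c : C) (r1 r2 t1 t2 : R).
Hypothesis r1_pos : 0 < r1.
Hypothesis r1_le_r2 : r1 <= r2.
Hypothesis t1_le_t2 : t1 <= t2.
Hypothesis H_cont : continuous_on_polar_rectangle H c r1 r2 t1 t2.

Lemma ex_CInt_arc r a b : r1 <= r <= r2 -> t1 <= a -> a <= b -> b <= t2 ->
  ex_CInt (fun t => H (polar c r t)) a b.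
Proof.
  intros Hr Ha Hab Hb. apply ex_CInt_continuous; auto.
  intros t Ht. apply continuous_polar_angle, H_cont; lra.
Qed.

Lemma ex_CInt_ray t a b : t1 <= t <= t2 -> r1 <= a -> a <= b -> b <= r2 ->
  ex_CInt (fun r => Cscal (/ r) (H (polar c r t))) a b.
Proof.
  intros Ht Ha Hab Hb. apply ex_CInt_continuous; auto.
  intros r Hr. apply continuous_polar_radius_inv; [lra | apply H_cont; lra].
Qed.

Lemma polar_boundary_integral_split_angle tm : t1 <= tm <= t2 ->
  polar_boundary_integral H c r1 r2 t1 t2
  = (polar_boundary_integral H c r1 r2 t1 tm + polar_boundary_integral H c r1 r2 tm t2)%C.
Proof.
  intros Ht. unfold polar_boundary_integral, arc_integral.
  rewrite <- (RInt_Chasles (V := C_R_CompleteNormedModule) (fun t => H (polar c r2 t)) t1 tm t2),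
          <- (RInt_Chasles (V := C_R_CompleteNormedModule) (fun t => H (polar c r1 t)) t1 tm t2).
  - change plus with Cplus. ring.
  - all: apply ex_CInt_arc; lra.
Qed.

Lemma polar_boundary_integral_split_radius rm : r1 <= rm <= r2 ->
  polar_boundary_integral H c r1 r2 t1 t2
  = (polar_boundary_integral H c r1 rm t1 t2 + polar_boundary_integral H c rm r2 t1 t2)%C.
Proof.
  intros Hr. unfold polar_boundary_integral, ray_integral.
  rewrite <- (RInt_Chasles (V := C_R_CompleteNormedModule)
                (fun r => Cscal (/ r) (H (polar c r t2))) r1 rm r2),
          <- (RInt_Chasles (V := C_R_CompleteNormedModule)
                (fun r => Cscal (/ r) (H (polar c r t1))) r1 rm r2).
  - change plus with Cplus. ring.
  - all: apply ex_CInt_ray; lra.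
Qed.

Lemma Cmod_polar_boundary_integral_le M :
  (forall r t, r1 <= r <= r2 -> t1 <= t <= t2 -> Cmod (H (polar c r t)) <= M) ->
  Cmod (polar_boundary_integral H c r1 r2 t1 t2) <= 2 * (t2 - t1) * M + 2 * (r2 - r1) * (M / r1).
Proof.
  intros HM.
  assert (Harc : forall r, r1 <= r <= r2 -> Cmod (arc_integral H c r t1 t2) <= (t2 - t1) * M).
  { intros r Hr. apply Cmod_CInt_le; [lra | apply ex_CInt_arc; lra |].
    intros t Ht. apply HM; auto. }
  assert (Hray : forall t, t1 <= t <= t2 ->
    Cmod (ray_integral H c t r1 r2) <= (r2 - r1) * (M / r1)).
  { intros t Ht. apply Cmod_CInt_le; [lra | apply ex_CInt_ray; lra |].
    intros r Hr. rewrite Cscal_RtoC, Cmod_mult, Cmod_R, Rabs_pos_eq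
      by (apply Rlt_le, Rinv_0_lt_compat; lra).
    pose proof (HM r t Hr Ht). pose proof (Cmod_ge_0 (H (polar c r t))).
    assert (/ r <= / r1) by (apply Rinv_le_contravar; lra).
    assert (0 < / r) by (apply Rinv_0_lt_compat; lra).
    unfold Rdiv. nra. }
  pose proof (Harc r1 ltac:(lra)). pose proof (Harc r2 ltac:(lra)).
  pose proof (Hray t1 ltac:(lra)). pose proof (Hray t2 ltac:(lra)).
  assert (Hdiff : forall u v : C, Cmod (u - v) <= Cmod u + Cmod v).
  { intros u v. unfold Cminus. eapply Rle_trans; [apply Cmod_triangle|]. rewrite Cmod_opp. lra. }
  unfold polar_boundary_integral.
  eapply Rle_trans; [apply Cmod_triangle|]. rewrite Cmod_mult, Cmod_Ci.
  pose proof (Hdiff (arc_integral H c r2 t1 t2) (arc_integral H c r1 t1 t2)).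
  pose proof (Hdiff (ray_integral H c t2 r1 r2) (ray_integral H c t1 r1 r2)).
  lra.
Qed.

End PolarRectangle.

Lemma polar_boundary_integral_plus (H1 H2 : C -> C) c r1 r2 t1 t2 :
  0 < r1 -> r1 <= r2 -> t1 <= t2 ->
  continuous_on_polar_rectangle H1 c r1 r2 t1 t2 ->
  continuous_on_polar_rectangle H2 c r1 r2 t1 t2 ->
  polar_boundary_integral (fun z => H1 z + H2 z)%C c r1 r2 t1 t2
  = (polar_boundary_integral H1 c r1 r2 t1 t2 + polar_boundary_integral H2 c r1 r2 t1 t2)%C.
Proof.
  intros Hr1 Hr Ht HC1 HC2.
  assert (Harc : forall r, r1 <= r <= r2 ->
    arc_integral (fun z => H1 z + H2 z)%C c r t1 t2
    = (arc_integral H1 c r t1 t2 + arc_integral H2 c r t1 t2)%C).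
  { intros r Hr'. apply (RInt_plus (V := C_R_CompleteNormedModule)).
    all: apply (ex_CInt_arc _ c r1 r2 t1 t2); auto; lra. }
  assert (Hray : forall t, t1 <= t <= t2 ->
    ray_integral (fun z => H1 z + H2 z)%C c t r1 r2
    = (ray_integral H1 c t r1 r2 + ray_integral H2 c t r1 r2)%C).
  { intros t Ht'. unfold ray_integral.
    rewrite <- (RInt_plus (V := C_R_CompleteNormedModule)).
    - apply (RInt_ext (V := C_R_CompleteNormedModule)). intros r _.
      rewrite !Cscal_RtoC. apply Cmult_plus_distr_l.
    - all: apply (ex_CInt_ray _ c r1 r2 t1 t2); auto; lra. }
  unfold polar_boundary_integral.
  rewrite !Harc, !Hray by lra. ring.
Qed.

Lemma polar_boundary_integral_ext (H1 H2 : C -> C) c r1 r2 t1 t2 : (forall z, H1 z = H2 z) ->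
  polar_boundary_integral H1 c r1 r2 t1 t2 = polar_boundary_integral H2 c r1 r2 t1 t2.
Proof.
  intros E. replace H1 with H2; [reflexivity|]. symmetry. apply functional_extensionality, E.
Qed.

Lemma arc_integral_linear (B c : C) r t1 t2 :
  arc_integral (fun z => B * (z - c))%C c r t1 t2 =
  (fst B * r * (sin t2 - sin t1) + snd B * r * (cos t2 - cos t1),
   - fst B * r * (cos t2 - cos t1) + snd B * r * (sin t2 - sin t1)).
Proof.
  apply (is_RInt_unique (V := C_R_CompleteNormedModule)).
  apply (is_RInt_fct_extend_pair (U := R_NormedModule) (V := R_NormedModule)).
  - eapply is_RInt_ext.
    2: { replace (fst B * r * (sin t2 - sin t1) + snd B * r * (cos t2 - cos t1))
           with ((fst B * r * sin t2 + snd B * r * cos t2)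
                 - (fst B * r * sin t1 + snd B * r * cos t1)) by ring.
         apply (is_RInt_derive (V := R_CompleteNormedModule)
                  (fun t => fst B * r * sin t + snd B * r * cos t)
                  (fun t => fst B * r * cos t - snd B * r * sin t)).
         - intros x _. auto_derive; auto. ring.
         - intros x _. apply (ex_derive_continuous (K := R_AbsRing) (V := R_NormedModule)).
           auto_derive; auto. }
    intros x _. unfold polar, expi. destruct B, c. simpl. ring.
  - eapply is_RInt_ext.
    2: { replace (- fst B * r * (cos t2 - cos t1) + snd B * r * (sin t2 - sin t1))
           with ((- fst B * r * cos t2 + snd B * r * sin t2)
                 - (- fst B * r * cos t1 + snd B * r * sin t1)) by ring.
         apply (is_RInt_derive (V := R_CompleteNormedModule)
                  (fun t => - fst B * r * cos t + snd B * r * sin t)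
                  (fun t => fst B * r * sin t + snd B * r * cos t)).
         - intros x _. auto_derive; auto. ring.
         - intros x _. apply (ex_derive_continuous (K := R_AbsRing) (V := R_NormedModule)).
           auto_derive; auto. }
    intros x _. unfold polar, expi. destruct B, c. simpl. ring.
Qed.

Lemma ray_integral_linear (B c : C) t r1 r2 : 0 < r1 -> r1 <= r2 ->
  ray_integral (fun z => B * (z - c))%C c t r1 r2 =
  ((r2 - r1) * (fst B * cos t - snd B * sin t), (r2 - r1) * (fst B * sin t + snd B * cos t)).
Proof.
  intros Hr1 Hr. apply (is_RInt_unique (V := C_R_CompleteNormedModule)).
  eapply is_RInt_ext;
    [| apply (is_RInt_const (V := C_R_CompleteNormedModule) r1 r2 (B * expi t)%C)].
  intros x Hx. rewrite Rmin_left, Rmax_right in Hx by lra.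
  rewrite Cscal_RtoC. unfold polar, expi. destruct B, c.
  unfold Cmult, Cplus, Cminus, Copp, RtoC; simpl.
  apply injective_projections; simpl; field; lra.
Qed.

Lemma polar_boundary_integral_const (k c : C) r1 r2 t1 t2 :
  polar_boundary_integral (fun _ => k) c r1 r2 t1 t2 = 0%C.
Proof. unfold polar_boundary_integral, arc_integral, ray_integral. ring. Qed.

Lemma polar_boundary_integral_linear (B c : C) r1 r2 t1 t2 : 0 < r1 -> r1 <= r2 ->
  polar_boundary_integral (fun z => B * (z - c))%C c r1 r2 t1 t2 = 0%C.
Proof.
  intros Hr1 Hr. unfold polar_boundary_integral.
  rewrite !arc_integral_linear, !ray_integral_linear by auto.
  destruct B. unfold Ci, Cmult, Cplus, Cminus, Copp; simpl.
  apply injective_projections; simpl; ring.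
Qed.

Lemma polar_boundary_integral_affine (k B c : C) r1 r2 t1 t2 : 0 < r1 -> r1 <= r2 -> t1 <= t2 ->
  polar_boundary_integral (fun z => k + B * (z - c))%C c r1 r2 t1 t2 = 0%C.
Proof.
  intros Hr1 Hr Ht.
  rewrite (polar_boundary_integral_plus (fun _ => k) (fun z => B * (z - c))%C),
          polar_boundary_integral_const, polar_boundary_integral_linear by
    (auto; intros r t _ _;
     first [apply continuous_within_at_const | apply continuous_within_at_linear]).
  apply Cplus_0_l.
Qed.

Lemma nested_intervals_common_point (lo hi : nat -> R) :
  (forall n, lo n <= lo (S n)) -> (forall n, hi (S n) <= hi n) -> (forall n, lo n <= hi n) ->
  exists u, forall n, lo n <= u <= hi n.
Proof.
  intros Hlo Hhi Hlohi.
  assert (Hmono : forall n m, (n <= m)%nat -> lo n <= lo m /\ hi m <= hi n).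
  { intros n m Hnm. induction Hnm; [lra|]. specialize (Hlo m). specialize (Hhi m). lra. }
  assert (Hcross : forall n m, lo n <= hi m).
  { intros n m. destruct (Nat.le_ge_cases n m) as [Hnm | Hnm];
      pose proof (Hmono _ _ Hnm); [specialize (Hlohi m) | specialize (Hlohi n)]; lra. }
  destruct (completeness (fun x => exists n, x = lo n)) as [u [Hub Hlub]].
  - exists (hi 0%nat). intros x [n ->]. apply Hcross.
  - exists (lo 0%nat). exists 0%nat. reflexivity.
  - exists u. intros n. split.
    + apply Hub. exists n. reflexivity.
    + apply Hlub. intros x [m ->]. apply Hcross.
Qed.

Record box := mkbox { box_r1 : R; box_r2 : R; box_t1 : R; box_t2 : R }.

Definition box_ordered (Q : box) : Prop := box_r1 Q <= box_r2 Q /\ box_t1 Q <= box_t2 Q.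

Definition quarter (low_r low_t : bool) (Q : box) : box :=
  let rm := (box_r1 Q + box_r2 Q) / 2 in
  let tm := (box_t1 Q + box_t2 Q) / 2 in
  mkbox (if low_r then box_r1 Q else rm) (if low_r then rm else box_r2 Q)
        (if low_t then box_t1 Q else tm) (if low_t then tm else box_t2 Q).

Lemma quarter_sides b1 b2 Q :
  box_r2 (quarter b1 b2 Q) - box_r1 (quarter b1 b2 Q) = (box_r2 Q - box_r1 Q) / 2 /\
  box_t2 (quarter b1 b2 Q) - box_t1 (quarter b1 b2 Q) = (box_t2 Q - box_t1 Q) / 2.
Proof. destruct b1, b2; simpl; split; field. Qed.

Lemma quarter_sub b1 b2 Q : box_ordered Q ->
  box_r1 Q <= box_r1 (quarter b1 b2 Q) /\ box_r2 (quarter b1 b2 Q) <= box_r2 Q /\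
  box_t1 Q <= box_t1 (quarter b1 b2 Q) /\ box_t2 (quarter b1 b2 Q) <= box_t2 Q /\
  box_ordered (quarter b1 b2 Q).
Proof. intros [Hr Ht]. unfold box_ordered. destruct b1, b2; simpl; lra. Qed.

Section Bisection.

Variable f : box -> C.
Variable admissible : box -> Prop.
Hypothesis admissible_ordered : forall Q, admissible Q -> box_ordered Q.
Hypothesis admissible_quarter : forall b1 b2 Q, admissible Q -> admissible (quarter b1 b2 Q).
Hypothesis f_quarters : forall Q, admissible Q ->
  f Q = (f (quarter true true Q) + f (quarter true false Q)
         + f (quarter false true Q) + f (quarter false false Q))%C.

Definition heavy_quarter (Q : box) : box :=
  if Rle_dec (Cmod (f Q) / 4) (Cmod (f (quarter true true Q))) then quarter true true Q else
  if Rle_dec (Cmod (f Q) / 4) (Cmod (f (quarter true false Q))) then quarter true false Q else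
  if Rle_dec (Cmod (f Q) / 4) (Cmod (f (quarter false true Q))) then quarter false true Q else
  quarter false false Q.

Lemma heavy_quarter_is_quarter Q : exists b1 b2, heavy_quarter Q = quarter b1 b2 Q.
Proof. unfold heavy_quarter. repeat destruct Rle_dec; eauto. Qed.

Lemma Cmod_heavy_quarter Q : admissible Q -> Cmod (f Q) / 4 <= Cmod (f (heavy_quarter Q)).
Proof.
  intros HQ. unfold heavy_quarter.
  repeat (destruct Rle_dec; [assumption|]).
  pose proof (f_quarters Q HQ) as E.
  assert (Cmod (f Q) <= Cmod (f (quarter true true Q)) + Cmod (f (quarter true false Q))
                        + Cmod (f (quarter false true Q)) + Cmod (f (quarter false false Q))).
  { rewrite E. eapply Rle_trans; [apply Cmod_triangle | apply Rplus_le_compat_r].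
    eapply Rle_trans; [apply Cmod_triangle | apply Rplus_le_compat_r]. apply Cmod_triangle. }
  lra.
Qed.

Fixpoint bisect (Q0 : box) (n : nat) : box :=
  match n with O => Q0 | S n => heavy_quarter (bisect Q0 n) end.

Variable Q0 : box.
Hypothesis Q0_admissible : admissible Q0.

Lemma bisect_admissible n : admissible (bisect Q0 n).
Proof.
  induction n as [|n IH]; [exact Q0_admissible|]. simpl.
  destruct (heavy_quarter_is_quarter (bisect Q0 n)) as [b1 [b2 ->]]. auto.
Qed.

Lemma Cmod_bisect_ge n : Cmod (f Q0) * (/ 4) ^ n <= Cmod (f (bisect Q0 n)).
Proof.
  induction n as [|n IH]; simpl; [lra|].
  pose proof (Cmod_heavy_quarter _ (bisect_admissible n)). lra.
Qed.

Lemma bisect_sides n :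
  box_r2 (bisect Q0 n) - box_r1 (bisect Q0 n) = (box_r2 Q0 - box_r1 Q0) * (/ 2) ^ n /\
  box_t2 (bisect Q0 n) - box_t1 (bisect Q0 n) = (box_t2 Q0 - box_t1 Q0) * (/ 2) ^ n.
Proof.
  induction n as [|n IH]; simpl; [split; ring|].
  destruct (heavy_quarter_is_quarter (bisect Q0 n)) as [b1 [b2 ->]].
  pose proof (quarter_sides b1 b2 (bisect Q0 n)). lra.
Qed.

Lemma bisect_common_point : exists u v, forall n,
  box_r1 (bisect Q0 n) <= u <= box_r2 (bisect Q0 n) /\
  box_t1 (bisect Q0 n) <= v <= box_t2 (bisect Q0 n).
Proof.
  assert (Hsub : forall n,
    box_r1 (bisect Q0 n) <= box_r1 (bisect Q0 (S n)) /\
    box_r2 (bisect Q0 (S n)) <= box_r2 (bisect Q0 n) /\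
    box_t1 (bisect Q0 n) <= box_t1 (bisect Q0 (S n)) /\
    box_t2 (bisect Q0 (S n)) <= box_t2 (bisect Q0 n)).
  { intros n. simpl. destruct (heavy_quarter_is_quarter (bisect Q0 n)) as [b1 [b2 ->]].
    pose proof (quarter_sub b1 b2 _ (admissible_ordered _ (bisect_admissible n))). tauto. }
  assert (Hside : forall n, box_r1 (bisect Q0 n) <= box_r2 (bisect Q0 n) /\
                           box_t1 (bisect Q0 n) <= box_t2 (bisect Q0 n))
    by (intros n; apply admissible_ordered, bisect_admissible).
  destruct (nested_intervals_common_point (fun n => box_r1 (bisect Q0 n))
              (fun n => box_r2 (bisect Q0 n))) as [u Hu];
    try (intros n; specialize (Hsub n); specialize (Hside n); tauto).
  destruct (nested_intervals_common_point (fun n => box_t1 (bisect Q0 n))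
              (fun n => box_t2 (bisect Q0 n))) as [v Hv];
    try (intros n; specialize (Hsub n); specialize (Hside n); tauto).
  exists u, v. auto.
Qed.

End Bisection.

Lemma Cmod_polar_boundary_integral_near (H : C -> C) c p l eps d rho r1 r2 t1 t2 :
  0 < r1 -> r1 <= r2 -> t1 <= t2 -> 0 <= eps -> rho < d ->
  continuous_on_polar_rectangle H c r1 r2 t1 t2 ->
  (forall w, Cmod (w - p) < d -> Cmod (H w - H p - l * (w - p)) <= eps * Cmod (w - p)) ->
  (forall r t, r1 <= r <= r2 -> t1 <= t <= t2 -> Cmod (polar c r t - p) <= rho) ->
  Cmod (polar_boundary_integral H c r1 r2 t1 t2)
  <= eps * rho * (2 * (t2 - t1) + 2 * (r2 - r1) / r1).
Proof.
  intros Hr1 Hr Ht Heps Hrho HC Happrox Hnear.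
  set (L := fun z => (H p + l * (c - p) + l * (z - c))%C).
  set (E := fun z => (H z - L z)%C).
  assert (HE : continuous_on_polar_rectangle E c r1 r2 t1 t2).
  { intros r t Hr' Ht'.
    apply continuous_within_at_minus; [apply HC; auto | apply continuous_within_at_affine]. }
  rewrite (polar_boundary_integral_ext H (fun z => E z + L z)%C) by (intros z; unfold E; ring).
  rewrite polar_boundary_integral_plus by (auto; intros r t _ _; apply continuous_within_at_affine).
  unfold L. rewrite polar_boundary_integral_affine, Cplus_0_r by auto.
  eapply Rle_trans;
    [apply (Cmod_polar_boundary_integral_le E c r1 r2 t1 t2 Hr1 Hr Ht HE (eps * rho))|].
  - intros r t Hr' Ht'. pose proof (Hnear r t Hr' Ht').
    replace (E (polar c r t)) with (H (polar c r t) - H p - l * (polar c r t - p))%C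
      by (unfold E, L; ring).
    eapply Rle_trans; [apply Happrox; lra|]. apply Rmult_le_compat_l; lra.
  - right. field. lra.
Qed.

Definition box_integral (H : C -> C) (c : C) (Q : box) : C :=
  polar_boundary_integral H c (box_r1 Q) (box_r2 Q) (box_t1 Q) (box_t2 Q).

Lemma box_integral_quarters H c Q : 0 < box_r1 Q -> box_ordered Q ->
  continuous_on_polar_rectangle H c (box_r1 Q) (box_r2 Q) (box_t1 Q) (box_t2 Q) ->
  box_integral H c Q
  = (box_integral H c (quarter true true Q) + box_integral H c (quarter true false Q)
     + box_integral H c (quarter false true Q) + box_integral H c (quarter false false Q))%C.
Proof.
  destruct Q as [a b x y]. unfold box_ordered, box_integral, quarter; simpl.
  intros Ha [Hab Hxy] HC.
  assert (HCsub : forall a' b', a <= a' -> b' <= b -> continuous_on_polar_rectangle H c a' b' x y)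
    by (intros a' b' Ha' Hb' r t Hr Ht; apply HC; lra).
  rewrite (polar_boundary_integral_split_radius H c a b x y) with (rm := (a + b) / 2)
    by (auto; lra).
  rewrite (polar_boundary_integral_split_angle H c a ((a + b) / 2) x y) with (tm := (x + y) / 2)
    by first [apply HCsub; lra | lra].
  rewrite (polar_boundary_integral_split_angle H c ((a + b) / 2) b x y) with (tm := (x + y) / 2)
    by first [apply HCsub; lra | lra].
  ring.
Qed.

Definition within_radii (r1 r2 : R) (Q : box) : Prop :=
  r1 <= box_r1 Q /\ box_r2 Q <= r2 /\ box_ordered Q.

Lemma within_radii_quarter r1 r2 b1 b2 Q :
  within_radii r1 r2 Q -> within_radii r1 r2 (quarter b1 b2 Q).
Proof.
  intros [HQ1 [HQ2 HQ]]. destruct (quarter_sub b1 b2 Q HQ) as [? [? [? [? ?]]]].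
  split; [lra | split; [lra | assumption]].
Qed.

Lemma exists_pow_half_lt D d : 0 <= D -> 0 < d -> exists N, D * (/ 2) ^ N < d.
Proof.
  intros HD Hd.
  destruct (pow_lt_1_zero (/ 2)) with (y := d / (D + 1)) as [N HN];
    [rewrite Rabs_pos_eq; lra | apply Rdiv_lt_0_compat; lra |].
  exists N. specialize (HN N (le_n N)). rewrite Rabs_pos_eq in HN by (apply pow_le; lra).
  apply (Rmult_lt_compat_r (D + 1)) in HN; [|lra].
  replace (d / (D + 1) * (D + 1)) with d in HN by (field; lra).
  pose proof (pow_le (/ 2) N ltac:(lra)). nra.
Qed.

Section Goursat.

Variables (H : C -> C) (c : C) (R0 : R).
Hypothesis H_holo : forall z, Cmod (z - c) < R0 -> C_holo_at H z.

Lemma continuous_on_polar_rectangle_holo r1 r2 t1 t2 : 0 <= r1 -> r2 < R0 ->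
  continuous_on_polar_rectangle H c r1 r2 t1 t2.
Proof.
  intros Hr1 Hr2 r t Hr Ht. apply ex_derive_continuous_at, H_holo.
  rewrite Cmod_polar_sub_center, Rabs_pos_eq; lra.
Qed.

(* Every point of [Q] is within [D h] of [polar c u v], where
   [D = (r2 - r1) + 2 R0 (t2 - t1)], and the boundary of [Q] has length [O(h)]. *)
Lemma Cmod_box_integral_scaled_le r1 r2 t1 t2 Q h u v l eps d :
  0 < r1 -> r1 <= r2 -> r2 < R0 -> t1 <= t2 -> 0 < h -> 0 < eps ->
  r1 <= box_r1 Q -> box_r2 Q <= r2 -> box_ordered Q ->
  box_r2 Q - box_r1 Q = (r2 - r1) * h -> box_t2 Q - box_t1 Q = (t2 - t1) * h ->
  box_r1 Q <= u <= box_r2 Q -> box_t1 Q <= v <= box_t2 Q ->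
  (forall w, Cmod (w - polar c u v) < d ->
     Cmod (H w - H (polar c u v) - l * (w - polar c u v)) <= eps * Cmod (w - polar c u v)) ->
  ((r2 - r1) + 2 * R0 * (t2 - t1)) * h < d ->
  Cmod (box_integral H c Q)
  <= eps * (2 * ((r2 - r1) + 2 * R0 * (t2 - t1)) * ((t2 - t1) + (r2 - r1) / r1)) * (h * h).
Proof.
  intros Hr1 Hr Hr2 Ht Hh Heps HQr1 HQr2 [HQr HQt] Hside_r Hside_t Hu Hv Happrox Hd.
  set (D := (r2 - r1) + 2 * R0 * (t2 - t1)) in *.
  assert (HD : 0 <= D) by (unfold D; nra).
  eapply Rle_trans.
  { apply (Cmod_polar_boundary_integral_near H c (polar c u v) l eps d (D * h)); try lra.
    - apply continuous_on_polar_rectangle_holo; lra.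
    - exact Happrox.
    - intros r t Hr' Ht'. eapply Rle_trans; [apply polar_lipschitz|].
      rewrite (Rabs_pos_eq u) by lra.
      assert (Rabs (r - u) <= (r2 - r1) * h) by (apply Rabs_le; lra).
      assert (Rabs (t - v) <= (t2 - t1) * h) by (apply Rabs_le; lra).
      pose proof (Rabs_pos (t - v)). unfold D. nra. }
  rewrite Hside_r, Hside_t.
  assert (Hq : (r2 - r1) * h / box_r1 Q <= (r2 - r1) / r1 * h).
  { unfold Rdiv. rewrite Rmult_assoc, (Rmult_comm h), <- Rmult_assoc.
    apply Rmult_le_compat_r; [lra|].
    apply Rmult_le_compat_l; [lra | apply Rinv_le_contravar; lra]. }
  replace (eps * (2 * D * (t2 - t1 + (r2 - r1) / r1)) * (h * h))
    with (eps * (D * h) * (2 * ((t2 - t1) * h) + 2 * ((r2 - r1) / r1 * h))) by ring.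
  apply Rmult_le_compat_l; [apply Rmult_le_pos; [lra | apply Rmult_le_pos; lra] | lra].
Qed.

(* Bisect the rectangle, keeping a quarter whose integral is at least a quarter of
   the whole; at the limit point [H] is affine up to [o(|z - p|)], and affine
   functions integrate to zero. *)
Lemma Cmod_polar_boundary_integral_le_eps r1 r2 t1 t2 eps :
  0 < r1 -> r1 <= r2 -> r2 < R0 -> t1 <= t2 -> 0 < eps ->
  Cmod (polar_boundary_integral H c r1 r2 t1 t2)
  <= eps * (2 * ((r2 - r1) + 2 * R0 * (t2 - t1)) * ((t2 - t1) + (r2 - r1) / r1)).
Proof.
  intros Hr1 Hr Hr2 Ht Heps.
  set (Q0 := mkbox r1 r2 t1 t2).
  assert (HQ0 : within_radii r1 r2 Q0) by (unfold within_radii, box_ordered, Q0; simpl; lra).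
  assert (Hquarters : forall Q, within_radii r1 r2 Q ->
    box_integral H c Q
    = (box_integral H c (quarter true true Q) + box_integral H c (quarter true false Q)
       + box_integral H c (quarter false true Q) + box_integral H c (quarter false false Q))%C).
  { intros Q [HQ1 [HQ2 HQ]]. apply box_integral_quarters; [lra | auto |].
    apply continuous_on_polar_rectangle_holo; lra. }
  destruct (bisect_common_point (box_integral H c) (within_radii r1 r2)
              (fun Q HQ => proj2 (proj2 HQ)) (within_radii_quarter r1 r2) Q0 HQ0) as [u [v Huv]].
  assert (Hu : r1 <= u <= r2) by (destruct (Huv 0%nat) as [Hu _]; simpl in Hu; lra).
  destruct (ex_derive_linear_approx H (polar c u v)) as [l Hl].
  { apply H_holo. rewrite Cmod_polar_sub_center, Rabs_pos_eq; lra. }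
  destruct (Hl eps Heps) as [d [Hd Happrox]].
  destruct (exists_pow_half_lt ((r2 - r1) + 2 * R0 * (t2 - t1)) d) as [N HN]; [nra | lra |].
  set (h := (/ 2) ^ N) in HN. assert (Hh : 0 < h) by (apply pow_lt; lra).
  set (QN := bisect (box_integral H c) Q0 N).
  assert (Hlow : Cmod (box_integral H c Q0) * (h * h) <= Cmod (box_integral H c QN)).
  { replace (h * h) with ((/ 4) ^ N) by (unfold h; rewrite <- Rpow_mult_distr; f_equal; field).
    apply (Cmod_bisect_ge (box_integral H c) (within_radii r1 r2) (within_radii_quarter r1 r2)
             Hquarters Q0 HQ0 N). }
  destruct (bisect_sides (box_integral H c) Q0 N) as [Hside_r Hside_t].
  destruct (bisect_admissible (box_integral H c) (within_radii r1 r2) (within_radii_quarter r1 r2)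
              Q0 HQ0 N) as [HQN1 [HQN2 HQN]].
  pose proof (Cmod_box_integral_scaled_le r1 r2 t1 t2 QN h u v l eps d Hr1 Hr Hr2 Ht Hh Heps
                HQN1 HQN2 HQN Hside_r Hside_t (proj1 (Huv N)) (proj2 (Huv N)) Happrox HN) as Hup.
  change (box_integral H c Q0) with (polar_boundary_integral H c r1 r2 t1 t2) in Hlow.
  apply (Rmult_le_reg_r (h * h)); [nra | lra].
Qed.

Theorem goursat_polar r1 r2 t1 t2 : 0 < r1 -> r1 <= r2 -> r2 < R0 -> t1 <= t2 ->
  polar_boundary_integral H c r1 r2 t1 t2 = 0%C.
Proof.
  intros Hr1 Hr Hr2 Ht.
  set (K := 2 * ((r2 - r1) + 2 * R0 * (t2 - t1)) * ((t2 - t1) + (r2 - r1) / r1)).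
  assert (HK : 0 <= K).
  { assert (0 <= (r2 - r1) / r1) by (apply Rdiv_le_0_compat; lra).
    unfold K. apply Rmult_le_pos; [nra | lra]. }
  apply Cmod_eq_0, Rle_antisym; [|apply Cmod_ge_0].
  apply le_epsilon. intros e He.
  apply (Rle_trans _ (e / (K + 1) * K)).
  - apply Cmod_polar_boundary_integral_le_eps; auto. apply Rdiv_lt_0_compat; lra.
  - apply (Rmult_le_reg_r (K + 1)); [lra|].
    replace (e / (K + 1) * K * (K + 1)) with (e * K) by (field; lra). nra.
Qed.

End Goursat.

(** * Mean value property and maximum modulus *)

Definition circle_integral (H : C -> C) (c : C) (r : R) : C := arc_integral H c r 0 (2 * PI).

Section MeanValue.

Variables (H : C -> C) (c : C) (R0 : R).
Hypothesis H_holo : forall z, Cmod (z - c) < R0 -> C_holo_at H z.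

Lemma ex_CInt_circle r : 0 <= r < R0 -> ex_CInt (fun t => H (polar c r t)) 0 (2 * PI).
Proof.
  intros Hr. pose proof PI_RGT_0.
  apply (ex_CInt_arc H c r r 0 (2 * PI)); try lra.
  apply (continuous_on_polar_rectangle_holo H c R0 H_holo); lra.
Qed.

(* The two rays of the annulus [r1 <= |z - c| <= r2] cut at angle 0 cancel. *)
Lemma circle_integral_radius_invariant r1 r2 : 0 < r1 -> r1 <= r2 -> r2 < R0 ->
  circle_integral H c r1 = circle_integral H c r2.
Proof.
  intros Hr1 Hr Hr2. pose proof PI_RGT_0.
  pose proof (goursat_polar H c R0 H_holo r1 r2 0 (2 * PI) Hr1 Hr Hr2 ltac:(lra)) as G.
  unfold polar_boundary_integral in G.
  assert (Hrays : ray_integral H c (2 * PI) r1 r2 = ray_integral H c 0 r1 r2).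
  { unfold ray_integral. apply (RInt_ext (V := C_R_CompleteNormedModule)). intros r _.
    rewrite <- (Rplus_0_l (2 * PI)), polar_add_2PI. reflexivity. }
  rewrite Hrays in G. unfold circle_integral.
  set (a1 := arc_integral H c r1 0 (2 * PI)) in *. set (a2 := arc_integral H c r2 0 (2 * PI)) in *.
  set (s := ray_integral H c 0 r1 r2) in *.
  replace a2 with (a2 - a1 + Ci * (s - s) + a1)%C by ring. rewrite G. ring.
Qed.

(* Small circles see [H] close to [H c]; by radius invariance all circles do. *)
Lemma circle_integral_mean_value r : 0 < r -> r < R0 ->
  circle_integral H c r = (RtoC (2 * PI) * H c)%C.
Proof.
  intros Hr HrR0. pose proof PI_RGT_0.
  assert (Hc : Ccontinuous_at H c).
  { apply ex_derive_continuous_at, H_holo. unfold Cminus. rewrite Cplus_opp_r, Cmod_0. lra. }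
  apply NNPP. intros Hne.
  set (eta := Cmod (circle_integral H c r - RtoC (2 * PI) * H c)).
  assert (Heta : 0 < eta).
  { apply Cmod_gt_0. intros Z. apply Hne.
    replace (circle_integral H c r) with
      ((circle_integral H c r - RtoC (2 * PI) * H c) + RtoC (2 * PI) * H c)%C by ring.
    rewrite Z. ring. }
  destruct (Hc (eta / (4 * PI))) as [d [Hd Hnear]]; [apply Rdiv_lt_0_compat; lra|].
  set (r' := Rmin r (d / 2)).
  assert (Hr' : 0 < r' <= r) by (split; [apply Rmin_pos; lra | apply Rmin_l]).
  assert (Hr'd : r' < d) by (eapply Rle_lt_trans; [apply Rmin_r | lra]).
  assert (Hbound : Cmod (circle_integral H c r' - RtoC (2 * PI) * H c)
                   <= (2 * PI - 0) * (eta / (4 * PI))).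
  { replace (RtoC (2 * PI) * H c)%C with (CInt (fun _ => H c) 0 (2 * PI))
      by (rewrite CInt_const; f_equal; f_equal; ring).
    unfold circle_integral, arc_integral.
    rewrite <- (RInt_minus (V := C_R_CompleteNormedModule));
      [| apply ex_CInt_circle; lra | apply ex_RInt_const].
    apply Cmod_CInt_le; [lra | |].
    - apply (ex_RInt_minus (V := C_R_CompleteNormedModule));
        [apply ex_CInt_circle; lra | apply ex_RInt_const].
    - intros t _. left. apply Hnear; [exact I|]. rewrite Cmod_polar_sub_center, Rabs_pos_eq; lra. }
  rewrite (circle_integral_radius_invariant r' r) in Hbound by lra.
  replace ((2 * PI - 0) * (eta / (4 * PI))) with (eta / 2) in Hbound by (field; lra).
  fold eta in Hbound. lra.
Qed.

End MeanValue.

Definition closed_disk (c : C) (r : R) (w : C) : Prop := Cmod (w - c) <= r.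

(* Uniform continuity along the boundary circle, from compactness of [[0, 2 PI]]. *)
Lemma inner_circle_close (H : C -> C) (c : C) (r e : R) : 0 < r -> 0 < e ->
  (forall z, closed_disk c r z -> continuous_within_at (closed_disk c r) H z) ->
  exists rho, 0 < rho < r /\ forall t, 0 <= t <= 2 * PI ->
    Cmod (H (polar c rho t)) <= Cmod (H (polar c r t)) + e.
Proof.
  intros Hr He Hcont.
  assert (Hon : forall rho t, 0 <= rho <= r -> closed_disk c r (polar c rho t))
    by (intros rho t Hrho; unfold closed_disk; rewrite Cmod_polar_sub_center, Rabs_pos_eq; lra).
  assert (Hdelta : forall t, exists d : posreal, forall w, closed_disk c r w ->
     Cmod (w - polar c r t) < d -> Cmod (H w - H (polar c r t)) < e / 2).
  { intros t. destruct (Hcont (polar c r t) (Hon r t ltac:(lra)) (e / 2)) as [d [Hd Hw]]; [lra|].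
    exists (mkposreal d Hd). exact Hw. }
  destruct (choice _ Hdelta) as [delta Hdelta_spec].
  assert (Hdelta' : forall t, 0 < delta t / (2 * r + 2))
    by (intros t; apply Rdiv_lt_0_compat; [apply cond_pos | lra]).
  destruct (compactness_value_1d 0 (2 * PI) (fun t => mkposreal _ (Hdelta' t))) as [d0 Hd0].
  pose proof (cond_pos d0) as Hd0_pos.
  pose proof (Rmax_l (r / 2) (r - d0 / 2)). pose proof (Rmax_r (r / 2) (r - d0 / 2)).
  assert (Rmax (r / 2) (r - d0 / 2) < r) by (apply Rmax_lub_lt; lra).
  set (rho := Rmax (r / 2) (r - d0 / 2)) in *.
  exists rho. split; [lra|].
  intros x Hx. destruct (NNPP _ (Hd0 x Hx)) as [t0 [Ht0 [Hxt Hdt]]]. simpl in Hxt, Hdt.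
  pose proof (cond_pos (delta t0)).
  assert (Hsmall : 2 * r * (delta t0 / (2 * r + 2)) + delta t0 / (2 * r + 2) < delta t0).
  { apply (Rmult_lt_reg_r (2 * r + 2)); [lra|]. field_simplify; lra. }
  assert (Hangle : 2 * Rabs r * Rabs (x - t0) <= 2 * r * (delta t0 / (2 * r + 2))).
  { rewrite (Rabs_pos_eq r) by lra. pose proof (Rabs_pos (x - t0)). nra. }
  assert (Hin : Cmod (polar c rho x - polar c r t0) < delta t0).
  { eapply Rle_lt_trans; [apply polar_lipschitz|].
    rewrite Rabs_minus_sym, Rabs_pos_eq by lra. lra. }
  assert (Hout : Cmod (polar c r x - polar c r t0) < delta t0).
  { eapply Rle_lt_trans; [apply polar_lipschitz|]. rewrite Rminus_diag, Rabs_R0. lra. }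
  pose proof (Hdelta_spec t0 _ (Hon rho x ltac:(lra)) Hin).
  pose proof (Hdelta_spec t0 _ (Hon r x ltac:(lra)) Hout).
  replace (H (polar c rho x)) with ((H (polar c rho x) - H (polar c r t0))
    - (H (polar c r x) - H (polar c r t0)) + H (polar c r x))%C by ring.
  eapply Rle_trans; [apply Cmod_triangle|]. unfold Cminus at 1.
  eapply Rle_trans; [apply Rplus_le_compat_r, Cmod_triangle|]. rewrite Cmod_opp. lra.
Qed.

Theorem maximum_modulus_center (H : C -> C) (c : C) (r K : R) : 0 < r ->
  (forall z, Cmod (z - c) < r -> C_holo_at H z) ->
  (forall z, closed_disk c r z -> continuous_within_at (closed_disk c r) H z) ->
  (forall t, 0 <= t <= 2 * PI -> Cmod (H (polar c r t)) <= K) ->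
  Cmod (H c) <= K.
Proof.
  intros Hr Hholo Hcont HK. pose proof PI_RGT_0.
  apply le_epsilon. intros e He.
  destruct (inner_circle_close H c r e Hr He Hcont) as [rho [Hrho Hclose]].
  assert (Hint : Cmod (circle_integral H c rho) <= (2 * PI - 0) * (K + e)).
  { apply Cmod_CInt_le; [lra | apply (ex_CInt_circle H c r Hholo); lra |].
    intros t Ht. pose proof (Hclose t Ht). pose proof (HK t Ht). lra. }
  rewrite (circle_integral_mean_value H c r Hholo rho), Cmod_mult, Cmod_R, Rabs_pos_eq in Hint
    by lra.
  nra.
Qed.

(** * Products of sines at equally spaced points *)

Fixpoint prodR (n : nat) (f : nat -> R) : R :=
  match n with O => 1 | S n => prodR n f * f n end.

Lemma prodR_ext n f g : (forall j, (j < n)%nat -> f j = g j) -> prodR n f = prodR n g.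
Proof. induction n; simpl; intros Hfg; auto. rewrite IHn, Hfg; auto. Qed.

Lemma prodR_mult n f g : prodR n (fun j => f j * g j) = prodR n f * prodR n g.
Proof. induction n; simpl; [ring|]. rewrite IHn. ring. Qed.

Lemma prodR_const n k : prodR n (fun _ => k) = k ^ n.
Proof. induction n; simpl; [ring|]. rewrite IHn. ring. Qed.

Lemma prodR_add a b f : prodR (a + b) f = prodR a f * prodR b (fun j => f (a + j)%nat).
Proof.
  induction b; simpl; [rewrite Nat.add_0_r; ring|].
  rewrite Nat.add_succ_r. simpl. rewrite IHb. ring.
Qed.

Lemma prodR_S_left n f : prodR (S n) f = f O * prodR n (fun j => f (S j)).
Proof. induction n; simpl; [ring|]. simpl in IHn. rewrite IHn. ring. Qed.

Lemma prodR_nonneg n f : (forall j, (j < n)%nat -> 0 <= f j) -> 0 <= prodR n f.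
Proof. induction n; simpl; intros Hf; [lra|]. apply Rmult_le_pos; auto. Qed.

Lemma prodR_le n f g : (forall j, (j < n)%nat -> 0 <= f j <= g j) -> prodR n f <= prodR n g.
Proof.
  induction n; simpl; intros Hfg; [lra|].
  apply Rmult_le_compat; [apply prodR_nonneg; intros; apply Hfg; lia | apply Hfg; lia | |];
    [apply IHn; intros; apply Hfg; lia | apply Hfg; lia].
Qed.

Lemma prodR_neq_0 n f : (forall j, (j < n)%nat -> f j <> 0) -> prodR n f <> 0.
Proof.
  induction n; simpl; intros Hf; [lra|].
  apply Rmult_integral_contrapositive. split; [apply IHn; intros; apply Hf |apply Hf]; lia.
Qed.

Lemma prodR_div n A f : (forall j, (j < n)%nat -> f j <> 0) ->
  prodR n (fun j => A / f j) = A ^ n / prodR n f.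
Proof.
  induction n; intros Hf; simpl; [field|].
  rewrite IHn by (intros; apply Hf; lia).
  field. split; [apply Hf; lia | apply prodR_neq_0; intros; apply Hf; lia].
Qed.

Lemma prodR_rotate n f : f n = f O -> prodR n (fun j => f (S j)) = prodR n f.
Proof.
  intros Hf. destruct n; [reflexivity|].
  rewrite (prodR_S_left n f). simpl. rewrite Hf. ring.
Qed.

Lemma prodR_shift_period (f : R -> R) n s t : INR n * s = 2 * PI ->
  (forall x, f (x + 2 * PI) = f x) ->
  prodR n (fun j => f (t + s + INR j * s)) = prodR n (fun j => f (t + INR j * s)).
Proof.
  intros Hn Hf. rewrite <- (prodR_rotate n (fun j => f (t + INR j * s))).
  - apply prodR_ext. intros j _. f_equal. rewrite S_INR. ring.
  - simpl. rewrite Hn, Hf. f_equal. ring.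
Qed.

Lemma prodR_shift_periods (f : R -> R) n s t m : INR n * s = 2 * PI ->
  (forall x, f (x + 2 * PI) = f x) ->
  prodR n (fun j => f (t - INR m * s + INR j * s)) = prodR n (fun j => f (t + INR j * s)).
Proof.
  intros Hn Hf. induction m.
  - apply prodR_ext. intros j _. f_equal. simpl. ring.
  - rewrite <- IHm, <- (prodR_shift_period f n s (t - INR (S m) * s)) by auto.
    apply prodR_ext. intros j _. f_equal. rewrite S_INR. ring.
Qed.

Definition sin_shift_product (n : nat) (y : R) : R :=
  prodR (n - 1) (fun j => sin (y + PI * INR (S j) / INR n)).

(* Pairing the factors [j] and [m + j] through [sin x * cos x = sin (2 x) / 2]. *)
Lemma sin_shift_product_double m y : (1 <= m)%nat ->
  sin_shift_product (2 * m) y = cos y * sin_shift_product m (2 * y) * (/ 2) ^ (m - 1).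
Proof.
  intros Hm. unfold sin_shift_product.
  replace (2 * m - 1)%nat with ((m - 1) + S (m - 1))%nat by lia.
  rewrite prodR_add, prodR_S_left.
  assert (HmR : 0 < INR m) by (apply lt_0_INR; lia).
  rewrite mult_INR. change (INR 2) with 2.
  replace (sin (y + PI * INR (S (m - 1 + 0)) / (2 * INR m))) with (cos y).
  2: { replace (S (m - 1 + 0)) with m by lia.
       replace (y + PI * INR m / (2 * INR m)) with (y + PI / 2) by (field; lra).
       rewrite sin_plus, cos_PI2, sin_PI2. ring. }
  rewrite <- (prodR_const (m - 1) (/ 2)).
  transitivity (cos y * (prodR (m - 1) (fun j => sin (y + PI * INR (S j) / (2 * INR m))) *
     prodR (m - 1) (fun j => sin (y + PI * INR (S (m - 1 + S j)) / (2 * INR m))))); [ring|].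
  rewrite Rmult_assoc. f_equal. rewrite <- !prodR_mult. apply prodR_ext. intros j Hj.
  replace (m - 1 + S j)%nat with (m + j)%nat by lia. rewrite !S_INR, plus_INR.
  replace (y + PI * (INR m + INR j + 1) / (2 * INR m))
    with ((y + PI * (INR j + 1) / (2 * INR m)) + PI / 2) by (field; lra).
  rewrite (sin_plus _ (PI / 2)), cos_PI2, sin_PI2.
  replace (2 * y + PI * (INR j + 1) / INR m)
    with (2 * (y + PI * (INR j + 1) / (2 * INR m))) by (field; lra).
  rewrite sin_2a. field.
Qed.

Lemma half_le_cos y : Rabs y <= PI / 3 -> / 2 <= cos y.
Proof.
  intros Hy. pose proof PI_RGT_0.
  assert (E : cos y = cos (Rabs y))
    by (unfold Rabs; destruct Rcase_abs; [rewrite cos_neg|]; reflexivity).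
  rewrite E. replace (/ 2) with (cos (PI / 3)) by (rewrite cos_PI3; field).
  apply cos_decr_1; try lra. apply Rabs_pos.
Qed.

Lemma one_le_pow2 k : (1 <= 2 ^ k)%nat.
Proof. induction k; simpl; lia. Qed.

Lemma INR_pow2 k : INR (2 ^ k) = 2 ^ k.
Proof. rewrite pow_INR. reflexivity. Qed.

Lemma INR_pow2_pos k : 0 < INR (2 ^ k).
Proof. rewrite INR_pow2. apply pow_lt. lra. Qed.

Lemma sin_shift_product_lower_bound k y : Rabs y <= PI / (2 * 2 ^ k) ->
  (/ 2) ^ (2 ^ k - 1)%nat <= Rabs (sin_shift_product (2 ^ k)%nat y).
Proof.
  revert y. induction k as [|k IH]; intros y Hy.
  - unfold sin_shift_product. simpl. rewrite Rabs_R1. lra.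
  - pose proof PI_RGT_0. pose proof (one_le_pow2 k).
    assert (Hk : 1 <= 2 ^ k) by (apply pow_R1_Rle; lra).
    replace (2 ^ S k)%nat with (2 * 2 ^ k)%nat by (simpl; lia).
    rewrite sin_shift_product_double, !Rabs_mult by auto.
    assert (Hcos : / 2 <= cos y).
    { apply half_le_cos. eapply Rle_trans; [exact Hy|]. simpl. unfold Rdiv.
      apply Rmult_le_compat_l; [lra | apply Rinv_le_contravar; lra]. }
    rewrite (Rabs_pos_eq (cos y)) by lra.
    assert (Hrec : (/ 2) ^ (2 ^ k - 1)%nat <= Rabs (sin_shift_product (2 ^ k)%nat (2 * y))).
    { apply IH. rewrite Rabs_mult, Rabs_pos_eq by lra. simpl in Hy.
      replace (PI / (2 * 2 ^ k)) with (2 * (PI / (2 * (2 * 2 ^ k)))) by (field; lra). lra. }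
    rewrite (Rabs_pos_eq ((/ 2) ^ (2 ^ k - 1)%nat)) by (apply pow_le; lra).
    replace (2 * 2 ^ k - 1)%nat with (S ((2 ^ k - 1) + (2 ^ k - 1)))%nat by lia.
    rewrite <- tech_pow_Rmult, pow_add.
    pose proof (pow_le (/ 2) (2 ^ k - 1) ltac:(lra)).
    assert (/ 2 * (/ 2) ^ (2 ^ k - 1)%nat
            <= cos y * Rabs (sin_shift_product (2 ^ k) (2 * y)))
      by (apply Rmult_le_compat; lra).
    nra.
Qed.

Lemma one_minus_cos_shift_product_lower_bound k t : Rabs t <= PI / INR (2 ^ k) ->
  (/ 2) ^ (2 ^ k - 1)%nat
  <= prodR (2 ^ k - 1) (fun j => 1 - cos (t + INR (S j) * (2 * PI / INR (2 ^ k)))).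
Proof.
  intros Ht. pose proof PI_RGT_0. pose proof (one_le_pow2 k).
  assert (Hn : 0 < INR (2 ^ k)) by apply INR_pow2_pos.
  set (P := sin_shift_product (2 ^ k) (t / 2)).
  assert (Hprod : prodR (2 ^ k - 1) (fun j => 1 - cos (t + INR (S j) * (2 * PI / INR (2 ^ k))))
                  = 2 ^ (2 ^ k - 1) * (P * P)).
  { rewrite (prodR_ext _ _ (fun j => 2 * (sin (t / 2 + PI * INR (S j) / INR (2 ^ k))
                                       * sin (t / 2 + PI * INR (S j) / INR (2 ^ k))))).
    - rewrite !prodR_mult, prodR_const. reflexivity.
    - intros j _. replace (t + INR (S j) * (2 * PI / INR (2 ^ k)))
        with (2 * (t / 2 + PI * INR (S j) / INR (2 ^ k))) by (field; lra).
      rewrite cos_2a_sin. ring. }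
  assert (HP : (/ 2) ^ (2 ^ k - 1)%nat <= Rabs P).
  { apply sin_shift_product_lower_bound. rewrite INR_pow2 in Ht.
    assert (0 < 2 ^ k) by (apply pow_lt; lra).
    unfold Rdiv. rewrite Rabs_mult, (Rabs_pos_eq (/ 2)) by lra.
    replace (PI * / (2 * 2 ^ k)) with ((PI / 2 ^ k) * / 2) by (field; lra).
    apply Rmult_le_compat_r; lra. }
  assert (HP2 : (/ 2) ^ (2 ^ k - 1)%nat * (/ 2) ^ (2 ^ k - 1)%nat <= P * P).
  { pose proof (pow_le (/ 2) (2 ^ k - 1) ltac:(lra)).
    rewrite <- (Rabs_pos_eq (P * P)) by apply Rle_0_sqr. rewrite Rabs_mult.
    apply Rmult_le_compat; lra. }
  rewrite Hprod.
  replace ((/ 2) ^ (2 ^ k - 1)%nat)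
    with (2 ^ (2 ^ k - 1) * ((/ 2) ^ (2 ^ k - 1)%nat * (/ 2) ^ (2 ^ k - 1)%nat)) at 1
    by (rewrite <- Rmult_assoc, <- Rpow_mult_distr, Rinv_r, pow1 by lra; ring).
  apply Rmult_le_compat_l; [apply pow_le; lra | exact HP2].
Qed.

(** * The rotation product *)

(* [C_holo_at] differentiates in [C_NormedModule], whereas Coquelicot's product
   rule is stated for [C] viewed as a module over itself. *)
Lemma is_derive_AbsRing_of_NormedModule (f : C -> C) x l :
  is_derive (K := C_AbsRing) (V := C_NormedModule) f x l ->
  is_derive (K := C_AbsRing) (V := AbsRing_NormedModule C_AbsRing) f x l.
Proof. intros [[A B C'] H2]. split; [split|]; auto. Qed.

Lemma is_derive_NormedModule_of_AbsRing (f : C -> C) x l :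
  is_derive (K := C_AbsRing) (V := AbsRing_NormedModule C_AbsRing) f x l ->
  is_derive (K := C_AbsRing) (V := C_NormedModule) f x l.
Proof. intros [[A B C'] H2]. split; [split|]; auto. Qed.

Definition rotate (c w z : C) : C := (c + w * (z - c))%C.

Lemma rotate_polar c r t s : rotate c (expi s) (polar c r t) = polar c r (t + s).
Proof.
  unfold rotate, polar, expi. rewrite cos_plus, sin_plus. destruct c.
  unfold Cmult, Cplus, Cminus, Copp, RtoC; simpl.
  apply injective_projections; simpl; ring.
Qed.

Lemma rotate_center c w : rotate c w c = c.
Proof. unfold rotate. ring. Qed.

Lemma Cmod_rotate_sub_center c w z : Cmod w = 1 -> Cmod (rotate c w z - c) = Cmod (z - c).
Proof.
  intros Hw. unfold rotate. replace (c + w * (z - c) - c)%C with (w * (z - c))%C by ring.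
  rewrite Cmod_mult, Hw. ring.
Qed.

Lemma rotate_is_derive c w z :
  is_derive (K := C_AbsRing) (V := AbsRing_NormedModule C_AbsRing) (rotate c w) z w.
Proof.
  split; [apply is_linear_scal_l|]. intros x _ eps. apply filter_forall. intros y.
  match goal with |- norm ?X <= _ => replace X with (@zero (AbsRing_NormedModule C_AbsRing)) end.
  - rewrite norm_zero. apply Rmult_le_pos; [apply Rlt_le, cond_pos | apply norm_ge_0].
  - unfold rotate, minus, plus, opp, scal, zero; simpl. unfold mult, plus, opp, zero; simpl. ring.
Qed.

Lemma ex_derive_comp_rotate (g : C -> C) c w z :
  C_holo_at g (rotate c w z) ->
  C_holo_at (fun z => g (rotate c w z)) z.
Proof.
  intros [l Hl]. eexists. apply (is_derive_comp g (rotate c w) z l w Hl (rotate_is_derive c w z)).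
Qed.

Lemma continuous_within_at_comp_rotate (g : C -> C) c r w z : Cmod w = 1 ->
  continuous_within_at (closed_disk c r) g (rotate c w z) ->
  continuous_within_at (closed_disk c r) (fun v => g (rotate c w v)) z.
Proof.
  intros Hw Hg eps Heps. destruct (Hg eps Heps) as [d [Hd Hnear]].
  exists d. split; auto. intros v Hv Hvz. apply Hnear.
  - unfold closed_disk. rewrite Cmod_rotate_sub_center; auto.
  - unfold rotate. replace (c + w * (v - c) - (c + w * (z - c)))%C with (w * (v - z))%C by ring.
    rewrite Cmod_mult, Hw. lra.
Qed.

Fixpoint prodC (n : nat) (f : nat -> C) : C :=
  match n with O => RtoC 1 | S n => (prodC n f * f n)%C end.

Lemma Cmod_prodC n f : Cmod (prodC n f) = prodR n (fun j => Cmod (f j)).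
Proof. induction n; simpl; [apply Cmod_1|]. rewrite Cmod_mult, IHn. reflexivity. Qed.

Lemma ex_derive_prodC n (F : nat -> C -> C) z :
  (forall j, (j < n)%nat -> C_holo_at (F j) z) ->
  C_holo_at (fun w => prodC n (fun j => F j w)) z.
Proof.
  induction n as [|n IH]; intros HF; simpl.
  - exists zero. apply (@is_derive_const C_AbsRing C_NormedModule (RtoC 1) z).
  - destruct IH as [l1 H1]; [intros j Hj; apply HF; lia|].
    destruct (HF n ltac:(lia)) as [l2 H2].
    eexists. apply is_derive_NormedModule_of_AbsRing.
    apply (@is_derive_mult C_AbsRing (fun w => prodC n (fun j => F j w)) (F n) z l1 l2);
      [apply is_derive_AbsRing_of_NormedModule; assumption ..|].
    intros; apply Cmult_comm.
Qed.

Lemma continuous_within_at_prodC D n (F : nat -> C -> C) z :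
  (forall j, (j < n)%nat -> continuous_within_at D (F j) z) ->
  continuous_within_at D (fun w => prodC n (fun j => F j w)) z.
Proof.
  induction n as [|n IH]; intros HF; simpl; [apply continuous_within_at_const|].
  apply (continuous_within_at_mult D (fun w => prodC n (fun j => F j w)) (F n));
    [apply IH; intros; apply HF | apply HF]; lia.
Qed.

Lemma cont_on_closed_disk_continuous_within (g : C -> C) : cont_on_closed_disk g ->
  forall z, Cmod z <= 1 -> continuous_within_at (fun w => Cmod w <= 1) g z.
Proof.
  intros Hg z Hz eps Heps.
  assert (Hball : locally (g z) (fun y => Cmod (y - g z) < eps)).
  { exists (mkposreal (eps / 2) ltac:(lra)). intros y [B1 B2].
    change (Rabs (fst y - fst (g z)) < eps / 2) in B1.
    change (Rabs (snd y - snd (g z)) < eps / 2) in B2.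
    eapply Rle_lt_trans; [apply Cmod_le_Rabs_fst_snd|]. simpl. unfold Rminus in B1, B2. lra. }
  destruct (Hg z Hz _ Hball) as [d Hd].
  exists d. split; [apply cond_pos|]. intros w Hw Hwz. apply Hd; auto. split.
  - change (Rabs (fst w - fst z) < d). eapply Rle_lt_trans; [|exact Hwz].
    apply (Rabs_fst_le_Cmod (w - z)%C).
  - change (Rabs (snd w - snd z) < d). eapply Rle_lt_trans; [|exact Hwz].
    apply (Rabs_snd_le_Cmod (w - z)%C).
Qed.

Lemma continuous_within_at_subset (D D' : C -> Prop) H z : (forall w, D' w -> D w) ->
  continuous_within_at D H z -> continuous_within_at D' H z.
Proof.
  intros Hsub Hc eps Heps. destruct (Hc eps Heps) as [d [Hd Hw]].
  exists d. split; auto.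
Qed.

(* The point [d + r e^(i p)] has modulus at most [1 - d r (1 - cos p)], since its
   squared modulus is [(d + r)^2 - 2 d r (1 - cos p)]; small circles
   ([r < 1/4]) stay inside the disk of radius [1/2]. *)
Lemma Cmod_on_circle_le (g : C -> C) (d r lam M p : R) :
  0 < d -> d <= 1 / 4 -> 0 < r -> d + r <= 1 -> 1 <= lam -> 1 <= M ->
  (forall gamma, 0 < gamma -> gamma <= 1 - d ->
     forall z, Cmod z <= 1 - gamma -> Cmod (g z) <= lam * M / gamma) ->
  0 < 1 - cos p ->
  Cmod (g (polar (RtoC d) r p)) <= (8 * lam * M / d) / (1 - cos p).
Proof.
  intros Hd Hd4 Hr Hdr Hl HM Hg Hp.
  pose proof (COS_bound p).
  set (A := lam * M). assert (HA : 1 <= A) by (unfold A; nra).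
  set (q := d * (1 - cos p)).
  assert (Hq : 0 < q <= 1 / 2) by (unfold q; split; nra).
  replace (8 * lam * M / d / (1 - cos p)) with (8 * (A / q)) by (unfold A, q; field; lra).
  assert (HAq : 2 * A <= A / q).
  { unfold Rdiv. rewrite (Rmult_comm 2). apply Rmult_le_compat_l; [lra|].
    replace 2 with (/ (1 / 2)) by field. apply Rinv_le_contravar; lra. }
  destruct (Rle_dec (1 / 4) r) as [Hr4 | Hr4].
  - set (gamma := r * q).
    assert (Hgamma : 0 < gamma <= 1 - d) by (unfold gamma; split; nra).
    apply (Rle_trans _ (A / gamma)).
    + apply Hg; try lra. rewrite Cmod_polar_real, <- (sqrt_pow2 (1 - gamma)) by lra.
      apply sqrt_le_1_alt.
      replace (2 * d * r * (1 - cos p)) with (2 * gamma) by (unfold gamma, q; ring).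
      assert ((d + r) ^ 2 <= 1) by nra. pose proof (pow2_ge_0 gamma). nra.
    + assert (/ r <= 4) by (replace 4 with (/ (1 / 4)) by field; apply Rinv_le_contravar; lra).
      assert (0 <= A / q) by (apply Rdiv_le_0_compat; lra).
      replace (A / gamma) with (A / q * / r) by (unfold gamma; field; lra). nra.
  - assert (Hz : Cmod (polar (RtoC d) r p) <= 1 - 1 / 2).
    { replace (polar (RtoC d) r p) with ((polar (RtoC d) r p - RtoC d) + RtoC d)%C by ring.
      eapply Rle_trans; [apply Cmod_triangle|].
      rewrite Cmod_polar_sub_center, Cmod_R, !Rabs_pos_eq; lra. }
    eapply Rle_trans; [apply (Hg (1 / 2) ltac:(lra) ltac:(lra) _ Hz)|].
    fold A. replace (A / (1 / 2)) with (2 * A) by field. lra.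
Qed.

Lemma one_minus_cos_pos p : 0 < p < 2 * PI -> 0 < 1 - cos p.
Proof.
  intros Hp. replace p with (2 * (p / 2)) by field. rewrite cos_2a_sin.
  assert (0 < sin (p / 2)) by (apply sin_gt_0; lra). nra.
Qed.

Section PeriodicSamples.

Variables (f : R -> R) (A b : R) (k : nat).
Let n := (2 ^ k)%nat.
Let s := 2 * PI / INR n.
Hypothesis A_nonneg : 0 <= A.
Hypothesis f_nonneg : forall x, 0 <= f x.
Hypothesis f_periodic : forall x, f (x + 2 * PI) = f x.
Hypothesis f_near_0 : forall x, Rabs x <= s / 2 -> f x <= b.
Hypothesis f_away_from_0 : forall x, 0 < 1 - cos x -> f x <= A / (1 - cos x).

Lemma prodR_samples_away_from_0_le t : Rabs t <= s / 2 ->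
  prodR (n - 1) (fun j => f (t + INR (S j) * s)) <= (2 * A) ^ (n - 1).
Proof.
  intros Ht. pose proof PI_RGT_0. assert (0 < INR n) by apply INR_pow2_pos.
  assert (Hs : INR n * s = 2 * PI) by (unfold s; field; lra).
  assert (Hpos : forall j, (j < n - 1)%nat -> 0 < 1 - cos (t + INR (S j) * s)).
  { intros j Hj. apply one_minus_cos_pos.
    assert (1 <= INR (S j) <= INR n - 1).
    { rewrite S_INR. pose proof (pos_INR j). split; [lra|].
      assert (INR (S j) <= INR (n - 1)) by (apply le_INR; lia).
      rewrite minus_INR, S_INR in * by lia. simpl in *. lra. }
    assert (0 < s) by (unfold s; apply Rdiv_lt_0_compat; lra).
    pose proof (Rle_abs t). pose proof (Rle_abs (- t)). rewrite Rabs_Ropp in *. nra. }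
  eapply Rle_trans.
  { apply (prodR_le _ _ (fun j => A / (1 - cos (t + INR (S j) * s)))). intros j Hj.
    split; [apply f_nonneg | apply f_away_from_0, Hpos, Hj]. }
  rewrite prodR_div by (intros j Hj; pose proof (Hpos j Hj); lra).
  pose proof (one_minus_cos_shift_product_lower_bound k t) as Hcos. fold n s in Hcos.
  assert (HP : (/ 2) ^ (n - 1) <= prodR (n - 1) (fun j => 1 - cos (t + INR (S j) * s))).
  { apply Hcos. eapply Rle_trans; [exact Ht|]. right. unfold s. field. lra. }
  assert (0 < (/ 2) ^ (n - 1)) by (apply pow_lt; lra).
  apply (Rle_trans _ (A ^ (n - 1) / (/ 2) ^ (n - 1))).
  - unfold Rdiv. apply Rmult_le_compat_l; [apply pow_le; lra | apply Rinv_le_contravar; lra].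
  - right. rewrite pow_inv, Rpow_mult_distr. unfold Rdiv. rewrite Rinv_inv. ring.
Qed.

(* Shift [t] by a whole number of steps [s] so that one sample lands within
   [s / 2] of [0]; that sample is at most [b], the others are away from [0]. *)
Lemma prodR_samples_le t : 0 <= t ->
  prodR n (fun j => f (t + INR j * s)) <= b * (2 * A) ^ (n - 1).
Proof.
  intros Ht. pose proof PI_RGT_0. assert (0 < INR n) by apply INR_pow2_pos.
  assert (Hs : 0 < s) by (unfold s; apply Rdiv_lt_0_compat; lra).
  destruct (nfloor_ex (t / s + 1 / 2)) as [m [Hm1 Hm2]].
  { assert (0 <= t / s) by (apply Rdiv_le_0_compat; lra). lra. }
  rewrite <- (prodR_shift_periods f n s t m) by (auto; unfold s; field; lra).
  set (t' := t - INR m * s).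
  assert (Ht' : Rabs t' <= s / 2).
  { apply Rabs_le. unfold t'.
    apply (Rmult_le_compat_r s) in Hm1; [|lra]. apply (Rmult_lt_compat_r s) in Hm2; [|lra].
    replace ((t / s + 1 / 2) * s) with (t + s / 2) in Hm1, Hm2 by (field; lra). lra. }
  assert (Hn : n = S (n - 1)) by (pose proof (one_le_pow2 k); unfold n; lia).
  rewrite Hn, prodR_S_left, <- Hn. simpl INR. rewrite Rmult_0_l, Rplus_0_r.
  apply Rmult_le_compat; [apply f_nonneg | apply prodR_nonneg; intros; apply f_nonneg | |].
  - apply f_near_0, Ht'.
  - apply prodR_samples_away_from_0_le, Ht'.
Qed.

End PeriodicSamples.

Definition rotation_step (k : nat) : R := 2 * PI / INR (2 ^ k).

Definition rotation_product (g : C -> C) (c : C) (k : nat) (z : C) : C :=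
  prodC (2 ^ k) (fun j => g (rotate c (expi (INR j * rotation_step k)) z)).

Lemma Cmod_rotation_product_center g c k :
  Cmod (rotation_product g c k c) = Cmod (g c) ^ (2 ^ k).
Proof.
  unfold rotation_product. rewrite Cmod_prodC, <- prodR_const.
  apply prodR_ext. intros j _. rewrite rotate_center. reflexivity.
Qed.

Lemma Cmod_rotation_product_polar g c k r t :
  Cmod (rotation_product g c k (polar c r t))
  = prodR (2 ^ k) (fun j => Cmod (g (polar c r (t + INR j * rotation_step k)))).
Proof.
  unfold rotation_product. rewrite Cmod_prodC.
  apply prodR_ext. intros j _. rewrite rotate_polar. reflexivity.
Qed.

Lemma ex_derive_rotation_product g c k r z :
  (forall w, Cmod (w - c) < r -> C_holo_at g w) ->
  Cmod (z - c) < r -> C_holo_at (rotation_product g c k) z.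
Proof.
  intros Hg Hz. apply ex_derive_prodC. intros j _. apply ex_derive_comp_rotate, Hg.
  rewrite Cmod_rotate_sub_center by apply Cmod_expi. exact Hz.
Qed.

Lemma continuous_within_rotation_product g c k r z :
  (forall w, closed_disk c r w -> continuous_within_at (closed_disk c r) g w) ->
  closed_disk c r z -> continuous_within_at (closed_disk c r) (rotation_product g c k) z.
Proof.
  intros Hg Hz. apply continuous_within_at_prodC. intros j _.
  apply continuous_within_at_comp_rotate; [apply Cmod_expi|]. apply Hg.
  unfold closed_disk in *. rewrite Cmod_rotate_sub_center by apply Cmod_expi. exact Hz.
Qed.

(* Maximum modulus for [rotation_product g d k] on the circle [|z - d| = r]: there
   one factor is evaluated at angle at most [PI / 2^k] from [0], hence bounded by
   [b], and the others are controlled by [Cmod_on_circle_le]. *)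
Lemma Cmod_center_pow_le (g : C -> C) (d r lam M b : R) (k : nat) :
  0 < d -> d <= 1 / 4 -> 0 < r -> d + r <= 1 -> 1 <= lam -> 1 <= M ->
  cont_on_closed_disk g ->
  (forall z, Cmod z < 1 -> C_holo_at g z) ->
  (forall gamma, 0 < gamma -> gamma <= 1 - d ->
     forall z, Cmod z <= 1 - gamma -> Cmod (g z) <= lam * M / gamma) ->
  (forall t, Rabs t <= PI / INR (2 ^ k) -> Cmod (g (polar (RtoC d) r t)) <= b) ->
  Cmod (g (RtoC d)) ^ (2 ^ k) <= b * (2 * (8 * lam * M / d)) ^ (2 ^ k - 1).
Proof.
  intros Hd Hd4 Hr Hdr Hl HM Hcont Hholo Hgrowth Harc.
  pose proof PI_RGT_0. set (c := RtoC d).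
  assert (Hc : Cmod c = d) by (unfold c; rewrite Cmod_R, Rabs_pos_eq; lra).
  assert (Hdisk : forall v, closed_disk c r v -> Cmod v <= 1).
  { intros v Hv. unfold closed_disk in Hv. replace v with ((v - c) + c)%C by ring.
    eapply Rle_trans; [apply Cmod_triangle | lra]. }
  rewrite <- Cmod_rotation_product_center.
  apply (maximum_modulus_center _ c r); auto.
  - intros z Hz. apply (ex_derive_rotation_product g c k r); auto.
    intros w Hw. apply Hholo. replace w with ((w - c) + c)%C by ring.
    eapply Rle_lt_trans; [apply Cmod_triangle | lra].
  - intros z Hz. apply continuous_within_rotation_product; auto. intros w Hw.
    apply (continuous_within_at_subset (fun w => Cmod w <= 1)); [exact Hdisk|].
    apply cont_on_closed_disk_continuous_within, Hdisk; auto.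
  - intros t Ht. rewrite Cmod_rotation_product_polar.
    apply (prodR_samples_le (fun x => Cmod (g (polar c r x)))); try tauto.
    + apply Rdiv_le_0_compat; nra.
    + intros x. apply Cmod_ge_0.
    + intros x. rewrite polar_add_2PI. reflexivity.
    + intros x Hx. apply Harc. eapply Rle_trans; [exact Hx|]. right. unfold rotation_step. field.
      apply Rgt_not_eq, INR_pow2_pos.
    + intros x Hx. apply Cmod_on_circle_le; auto.
Qed.

Lemma PI_div_pow2_le_half a k : 0 < a -> 2 * PI / a <= 2 ^ k -> PI / INR (2 ^ k) <= a / 2.
Proof.
  intros Ha Hk. pose proof PI_RGT_0. rewrite INR_pow2.
  assert (Hpow : 0 < 2 ^ k) by (apply pow_lt; lra).
  apply (Rmult_le_compat_r (a / 2)) in Hk; [|lra].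
  replace (2 * PI / a * (a / 2)) with PI in Hk by (field; lra).
  apply (Rmult_le_reg_r (2 ^ k)); [lra|].
  replace (PI / 2 ^ k * 2 ^ k) with PI by (field; lra). lra.
Qed.

Lemma exists_pow2_between y : 1 <= y -> exists k : nat, y <= 2 ^ k < 2 * y.
Proof.
  intros Hy.
  assert (Hgen : forall N : nat, forall y, 1 <= y <= 2 ^ N -> exists k : nat, y <= 2 ^ k < 2 * y).
  { induction N as [|N IH]; intros z Hz.
    - exists 0%nat. simpl in *. lra.
    - destruct (Rle_dec z (2 ^ N)); [apply IH; lra|].
      exists (S N). simpl in *. lra. }
  destruct (nfloor_ex y ltac:(lra)) as [N HN].
  apply (Hgen (S N)). split; auto.
  assert (INR (S N) <= 2 ^ S N).
  { clear. induction N; [simpl; lra|]. rewrite S_INR.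
    assert (1 <= 2 ^ S N) by (apply pow_R1_Rle; lra).
    replace (2 ^ S (S N)) with (2 * 2 ^ S N) by reflexivity. lra. }
  rewrite S_INR in *. lra.
Qed.

Lemma Rpower_lt_base_lt_1 x y z : 0 < x < 1 -> y < z -> Rpower x z < Rpower x y.
Proof.
  intros Hx Hyz. unfold Rpower. apply exp_increasing.
  assert (ln x < 0) by (rewrite <- ln_1; apply ln_increasing; lra). nra.
Qed.

(* With [x = d kappa / (lambda M) <= 1/4] and [n = 2^k < 4 PI / a], the left factor
   is below [x^(3 n) <= (kappa d / (16 lambda M))^n], which absorbs the growth
   factor [(16 lambda M / d)^(n - 1)]. *)
Lemma Rpower_mul_growth_lt_pow (d a lam M kap : R) (k : nat) :
  0 < d -> d <= 1 / 4 -> 0 < a -> 1 <= lam -> 1 <= M -> 0 < kap -> kap <= 1 ->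
  2 ^ k < 2 * (2 * PI / a) ->
  Rpower (d * kap / (lam * M)) (12 * PI / a) * (2 * (8 * lam * M / d)) ^ (2 ^ k - 1)
  < kap ^ (2 ^ k).
Proof.
  intros Hd Hd4 Ha Hl HM Hk Hk1 Hn.
  pose proof (one_le_pow2 k).
  assert (HlM : 1 <= lam * M) by nra.
  set (x := d * kap / (lam * M)).
  assert (Hx : 0 < x <= 1 / 4).
  { unfold x. split; [apply Rdiv_lt_0_compat; nra|].
    apply (Rle_trans _ (d * kap / 1));
      [unfold Rdiv; apply Rmult_le_compat_l, Rinv_le_contravar; nra|].
    unfold Rdiv. rewrite Rinv_1, Rmult_1_r. nra. }
  set (n := (2 ^ k)%nat).
  assert (Hpow : Rpower x (12 * PI / a) < x ^ (3 * n)).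
  { rewrite <- Rpower_pow by lra. apply Rpower_lt_base_lt_1; [lra|].
    unfold n. rewrite mult_INR, INR_pow2. simpl (INR 3).
    replace (12 * PI / a) with (3 * (2 * (2 * PI / a))) by (field; lra). lra. }
  set (B := 2 * (8 * lam * M / d)).
  set (q := d / (16 * lam * M)).
  assert (HB : 0 < B) by (unfold B; apply Rmult_lt_0_compat; [lra | apply Rdiv_lt_0_compat; nra]).
  assert (Hq : 0 < q <= 1).
  { unfold q. split; [apply Rdiv_lt_0_compat; nra|].
    apply (Rle_trans _ (d * / 1)); [apply Rmult_le_compat_l, Rinv_le_contravar; nra|].
    rewrite Rinv_1. lra. }
  assert (HqB : q * B = 1) by (unfold q, B; field; nra).
  assert (Hx3 : x ^ (3 * n) <= (kap * q) ^ n).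
  { rewrite pow_mult. apply pow_incr. split; [apply pow_le; lra|].
    replace (kap * q) with (x / 16) by (unfold x, q; field; nra). simpl. nra. }
  assert (Hsplit : forall y, y ^ n = y * y ^ (n - 1))
    by (intros y; rewrite tech_pow_Rmult; f_equal; unfold n; lia).
  assert (Habsorb : (kap * q) ^ n * B ^ (n - 1) <= kap ^ n).
  { rewrite !Hsplit.
    replace (kap * q * (kap * q) ^ (n - 1) * B ^ (n - 1))
      with (kap * kap ^ (n - 1) * q * (q * B) ^ (n - 1)) by (rewrite !Rpow_mult_distr; ring).
    rewrite HqB, pow1.
    assert (0 < kap * kap ^ (n - 1)) by (apply Rmult_lt_0_compat; [lra | apply pow_lt; lra]). nra. }
  assert (0 < B ^ (n - 1)) by (apply pow_lt; lra).
  apply (Rlt_le_trans _ (x ^ (3 * n) * B ^ (n - 1))); [apply Rmult_lt_compat_r; auto|].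
  apply (Rle_trans _ ((kap * q) ^ n * B ^ (n - 1))); [apply Rmult_le_compat_r|]; lra.
Qed.

Lemma arcP_polar d mu a t : 0 < a -> 0 < gamma_radius d mu <= 1 -> Rabs t <= a / 2 ->
  arcP d mu a (polar (RtoC d) (gamma_radius d mu) t).
Proof.
  intros Ha Hr Ht. exists t. split.
  - eapply Rle_trans; [exact Ht|]. unfold Rdiv.
    apply Rmult_le_compat_l; [lra | apply Rinv_le_contravar; lra].
  - unfold polar, expi, RtoC, Cmult, Cplus; simpl. f_equal; ring.
Qed.

Theorem corollary5p6 :
  exists Cst : R, 0 < Cst /\
  forall (delta a lambda M kappa mu : R) (g : C -> C),
    0 < delta -> delta <= 1 / 4 ->
    0 < a -> a < PI ->
    1 <= lambda -> 1 <= M ->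
    0 < kappa -> kappa <= 1 ->
    0 <= mu -> mu < 1 - delta ->
    cont_on_closed_disk g ->
    (forall z : C, Cmod z < 1 -> C_holo_at g z) ->
    kappa <= Cmod (g (RtoC delta)) ->
    (forall gamma : R, 0 < gamma -> gamma <= 1 - delta ->
       forall z : C, Cmod z <= 1 - gamma -> Cmod (g z) <= lambda * M / gamma) ->
    exists z : C, arcP delta mu a z /\
      Rpower (delta * kappa / (lambda * M)) (Cst / a) <= Cmod (g z).
Proof.
  pose proof PI_RGT_0.
  exists (12 * PI). split; [lra|].
  intros d a lam M kap mu g Hd Hd4 Ha HaPI Hl HM Hk Hk1 Hmu Hmu1 Hcont Hholo Hgd Hgrowth.
  assert (Hr : 0 < gamma_radius d mu <= 1 - d) by (unfold gamma_radius; lra).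
  destruct (exists_pow2_between (2 * PI / a)) as [k [Hk_low Hk_high]].
  { apply (Rmult_le_reg_r a); [lra|]. unfold Rdiv. rewrite Rmult_assoc, Rinv_l; lra. }
  set (b := Rpower (d * kap / (lam * M)) (12 * PI / a)).
  apply NNPP. intros Hnone.
  assert (Harc : forall t, Rabs t <= PI / INR (2 ^ k) ->
                   Cmod (g (polar (RtoC d) (gamma_radius d mu) t)) <= b).
  { intros t Ht. apply Rnot_lt_le. intros Hbig. apply Hnone.
    exists (polar (RtoC d) (gamma_radius d mu) t). split; [|lra].
    apply arcP_polar; [lra | lra |].
    eapply Rle_trans; [exact Ht | apply PI_div_pow2_le_half; auto]. }
  pose proof (Cmod_center_pow_le g d (gamma_radius d mu) lam M b k Hd Hd4 (proj1 Hr)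
                ltac:(lra) Hl HM Hcont Hholo Hgrowth Harc) as Hupper.
  pose proof (Rpower_mul_growth_lt_pow d a lam M kap k Hd Hd4 Ha Hl HM Hk Hk1 Hk_high) as Hlower.
  fold b in Hlower.
  assert (kap ^ (2 ^ k) <= Cmod (g (RtoC d)) ^ (2 ^ k)) by (apply pow_incr; lra).
  lra.
Qed.
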